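(* For every $t\ge1$, $$\mathbb E_0\big[\phi_t(\overline{\mathcal X})\big]\ge\mathbb E\big[\phi_t(\overline{\mathcal Z})\big],$$ where $\overline{\mathcal X}=(\overline{\mathcal X}(s^t))_{s^t\in\mathcal S^t}$ and $\overline{\mathcal Z}=(\overline{\mathcal Z}(s^t))_{s^t\in\mathcal S^t}$.
   Context: $V=\{1,\dots,N\}$; $P$ row-stochastic irreducible aperiodic with stationary distribution $\pi>0$; $\beta\in\mathbb R^N$. $P(s^t)=\pi_{s_1}\prod_{k<t}P_{s_ks_{k+1}}$, $\mathcal S^t=\{s^t\in V^t:P(s^t)>0\}$, $C_t=|\mathcal S^t|$, $\beta(s^t)^2=\sum_{k=1}^t\beta_{s_k}^2$. For $x=(x_{s^t})_{s^t\in\mathcal S^t}\in\mathbb R^{C_t}$, $$\phi_t(x)=-\frac1t\log\Big(\sum_{s^t\in\mathcal S^t}P(s^t)e^{-\beta(s^t)^2/2+x_{s^t}}\Big).$$ Under $\mathbb P_0$ the $X_{i,k}$ ($i\in V$, $k\ge1$) are i.i.d. $\mathcal N(0,1)$, and $\overline{\mathcal X}(s^t)=\sum_{k=1}^t\beta_{s_k}X_{s_k,k}$. On a probability space $(\Omega,\mathcal F,\mathbb P)$ (expectation $\mathbb E$), for each $s^t\in\mathcal S^t$ let $Z_{s^t}=(Z_{s^t,1},\dots,Z_{s^t,t})$ have i.i.d. $\mathcal N(0,1)$ entries, the vectors for distinct $s^t$ being independent, and $\overline{\mathcal Z}(s^t)=\sum_{k=1}^t\beta_{s_k}Z_{s^t,k}$.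 *)

From Stdlib Require Import Reals List Arith.
Import ListNotations.
Open Scope R_scope.

(* States V = {1,...,N} are encoded as the naturals 0,...,N-1.
   P : nat -> nat -> R is the transition matrix, pi the stationary law,
   beta : nat -> R the vector beta. *)

Definition sumN (N : nat) (f : nat -> R) : R :=
  fold_right Rplus 0 (map f (seq 0 N)).

Fixpoint Ppow (N : nat) (P : nat -> nat -> R) (m : nat) (i j : nat) : R :=
  match m with
  | O => if Nat.eqb i j then 1 else 0
  | S m' => sumN N (fun l => Ppow N P m' i l * P l j)
  end.

Definition row_stochastic (N : nat) (P : nat -> nat -> R) : Prop :=
  (forall i j, (i < N)%nat -> (j < N)%nat -> 0 <= P i j) /\
  (forall i, (i < N)%nat -> sumN N (fun j => P i j) = 1).

Definition irreducible (N : nat) (P : nat -> nat -> R) : Prop :=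
  forall i j, (i < N)%nat -> (j < N)%nat -> exists m, 0 < Ppow N P m i j.

Definition aperiodic (N : nat) (P : nat -> nat -> R) : Prop :=
  forall i, (i < N)%nat -> forall d : nat,
    (forall m, (1 <= m)%nat -> 0 < Ppow N P m i i -> Nat.divide d m) ->
    d = 1%nat.

Definition stationary_pos (N : nat) (P : nat -> nat -> R) (pi : nat -> R) : Prop :=
  (forall i, (i < N)%nat -> 0 < pi i) /\
  sumN N pi = 1 /\
  (forall j, (j < N)%nat -> sumN N (fun i => pi i * P i j) = pi j).

Fixpoint words (N t : nat) : list (list nat) :=
  match t with
  | O => [ [] ]
  | S t' => flat_map (fun i => map (cons i) (words N t')) (seq 0 N)
  end.

Fixpoint chain (P : nat -> nat -> R) (a : nat) (r : list nat) : R :=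
  match r with
  | [] => 1
  | b :: r' => P a b * chain P b r'
  end.

Definition Pword (pi : nat -> R) (P : nat -> nat -> R) (s : list nat) : R :=
  match s with
  | [] => 1
  | a :: r => pi a * chain P a r
  end.

Definition St (N : nat) (pi : nat -> R) (P : nat -> nat -> R) (t : nat)
  : list (list nat) :=
  filter (fun s => if Rlt_dec 0 (Pword pi P s) then true else false) (words N t).

Definition betasq (beta : nat -> R) (s : list nat) : R :=
  fold_right (fun a acc => beta a ^ 2 + acc) 0 s.

Definition phi (N : nat) (pi : nat -> R) (P : nat -> nat -> R) (beta : nat -> R)
  (t : nat) (x : list nat -> R) : R :=
  - / INR t *
  ln (fold_right Rplus 0
        (map (fun s => Pword pi P s * exp (- betasq beta s / 2 + x s))
             (St N pi P t))).

(* Xbar(s^t) = sum_{k=1}^t beta_{s_k} X_{s_k,k}, where the Gaussian X_{i,k}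
   (i in 0..N-1, k in 1..t) is the coordinate  w (i + N*(k-1)). *)
Fixpoint xsum (N : nat) (beta : nat -> R) (w : nat -> R) (k : nat) (s : list nat) : R :=
  match s with
  | [] => 0
  | a :: r => beta a * w (a + N * k)%nat + xsum N beta w (S k) r
  end.
Definition Xbar (N : nat) (beta : nat -> R) (w : nat -> R) (s : list nat) : R :=
  xsum N beta w 0 s.

Fixpoint word_index (l : list (list nat)) (s : list nat) : nat :=
  match l with
  | [] => O
  | u :: l' => if list_eq_dec Nat.eq_dec u s then O else S (word_index l' s)
  end.

(* Zbar(s^t) = sum_{k=1}^t beta_{s_k} Z_{s^t,k}, where Z_{s^t,k} is the coordinate
   w (j*t + (k-1)), j the position of s^t in S^t; so distinct s^t use disjoint
   blocks of coordinates (independent vectors). *)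
Fixpoint zsum (beta : nat -> R) (w : nat -> R) (base k : nat) (s : list nat) : R :=
  match s with
  | [] => 0
  | a :: r => beta a * w (base + k)%nat + zsum beta w base (S k) r
  end.
Definition Zbar (N : nat) (pi : nat -> R) (P : nat -> nat -> R) (beta : nat -> R)
  (t : nat) (w : nat -> R) (s : list nat) : R :=
  zsum beta w (word_index (St N pi P t) s * t)%nat 0 s.

Definition gauss_density (y : R) : R := exp (- y ^ 2 / 2) / sqrt (2 * PI).

Definition improper_int (f : R -> R) (L : R) : Prop :=
  forall eps, 0 < eps -> exists M, forall a b, a <= - M -> M <= b ->
    exists pr : Riemann_integrable f a b, Rabs (RiemannInt pr - L) < eps.

Definition vcons (y : R) (w : nat -> R) : nat -> R :=
  fun n => match n with O => y | S n' => w n' end.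

(* gauss_exp d g v : v = E[g(W_0,...,W_{d-1})] with W_i i.i.d. N(0,1)
   (coordinates >= d are set to 0 and unused), computed as an iterated
   integral against the standard Gaussian density. *)
Fixpoint gauss_exp (d : nat) (g : (nat -> R) -> R) (v : R) : Prop :=
  match d with
  | O => v = g (fun _ => 0)
  | S d' => exists h : R -> R,
      (forall y, gauss_exp d' (fun w => g (vcons y w)) (h y)) /\
      improper_int (fun y => gauss_density y * h y) v
  end.

From Stdlib Require Import Reals List Arith Lra Lia Psatz FunctionalExtensionality Classical_Prop.
From Coquelicot Require Import Coquelicot.
Import ListNotations.
Open Scope R_scope.

(* Both sides are Gaussian means of [phi_t] applied to linear Gaussian fields with the same
   variances: in [Xbar] all words with letter [a] at time [k] read one shared coordinate, in [Zbar]
   every word reads private coordinates. Place all coordinates in one Gaussian vector and, one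
   position of one word at a time, let that word read a fresh private coordinate instead of the
   shared one. Transposing the two coordinates preserves the Gaussian law, and with all other
   coordinates frozen, [exp (- t phi_t)] is [a0 e^(b X) + a1 e^(b Y) + C] with [X] the coordinate
   read at that position and [Y] the shared one; the inequality
   [T(u, u) T(u', u') <= T(u', u) T(u, u')] then shows that each replacement can only lower the
   mean of [phi_t].
   Only Lipschitz integrands occur ([phi_t] is Lipschitz in the field), and for them the Gaussian
   mean is the limit of truncated Riemann integrals against the density; linearity, monotonicity
   and Fubini's theorem hold by elementary estimates on the Gaussian tails. *)

Definition cont (f : R -> R) := forall x, continuous f x.

Lemma continuous_of_ex_derive (f : R -> R) x : ex_derive f x -> continuous f x.
Proof. apply (@ex_derive_continuous R_AbsRing R_NormedModule). Qed.

Lemma cont_of_ex_derive f : (forall x, ex_derive f x) -> cont f.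
Proof. intros H x. apply continuous_of_ex_derive. auto. Qed.

Lemma cont_plus f g : cont f -> cont g -> cont (fun x => f x + g x).
Proof.
  intros Hf Hg x. apply (@continuous_plus R_UniformSpace R_AbsRing R_NormedModule f g x); auto.
Qed.

Lemma cont_mult f g : cont f -> cont g -> cont (fun x => f x * g x).
Proof. intros Hf Hg x. apply (@continuous_mult R_UniformSpace R_AbsRing f g x); auto. Qed.

Lemma cont_const c : cont (fun _ => c).
Proof. intros x. apply continuous_const. Qed.

Lemma cont_id : cont (fun x => x).
Proof. intros x. apply continuous_id. Qed.

Lemma cont_opp f : cont f -> cont (fun x => - f x).
Proof. intros Hf x. apply (@continuous_opp R_UniformSpace R_AbsRing R_NormedModule f x); auto. Qed.

Lemma cont_minus f g : cont f -> cont g -> cont (fun x => f x - g x).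
Proof. intros. apply cont_plus; auto. apply cont_opp; auto. Qed.

Lemma cont_abs f : cont f -> cont (fun x => Rabs (f x)).
Proof. intros Hf x. apply continuous_Rabs_comp. apply Hf. Qed.

Lemma cont_comp_opp f : cont f -> cont (fun y => f (- y)).
Proof.
  intros Hf x.
  apply (@continuous_comp R_UniformSpace R_UniformSpace R_UniformSpace (fun y => - y) f).
  apply (cont_opp (fun y => y) cont_id). apply Hf.
Qed.

Lemma ex_RInt_cont (f : R -> R) a b : cont f -> ex_RInt f a b.
Proof. intros Hc. apply (@ex_RInt_continuous R_CompleteNormedModule). intros z _. apply (Hc z). Qed.

Lemma RInt_le_cont (f g : R -> R) a b : a <= b -> cont f -> cont g ->
  (forall x, a < x < b -> f x <= g x) -> RInt f a b <= RInt g a b.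
Proof. intros Hab Hf Hg H. apply RInt_le; auto; apply ex_RInt_cont; auto. Qed.

Lemma abs_RInt_le_cont (f : R -> R) a b : a <= b -> cont f ->
  Rabs (RInt f a b) <= RInt (fun t => Rabs (f t)) a b.
Proof. intros. apply abs_RInt_le; auto. apply ex_RInt_cont; auto. Qed.

Lemma abs_RInt_le_const_cont (h : R -> R) c d B : cont h -> (forall y, Rabs (h y) <= B) ->
  Rabs (RInt h c d) <= Rabs (d - c) * B.
Proof.
  intros Hc HB. destruct (Rle_dec c d).
  - rewrite (Rabs_pos_eq (d - c)) by lra. apply abs_RInt_le_const; auto. apply ex_RInt_cont; auto.
  - rewrite <- (opp_RInt_swap (V:=R_CompleteNormedModule)) by (apply ex_RInt_cont; auto).
    unfold opp; simpl. rewrite Rabs_Ropp, (Rabs_left (d - c)) by lra.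
    replace (- (d - c)) with (c - d) by ring.
    apply abs_RInt_le_const; auto. lra. apply ex_RInt_cont; auto.
Qed.

Lemma RInt_scal_cont (f : R -> R) a b k : cont f -> RInt (fun x => k * f x) a b = k * RInt f a b.
Proof. intros Hf. apply (RInt_scal (V:=R_CompleteNormedModule)). apply ex_RInt_cont; auto. Qed.

Lemma RInt_plus_cont (f g : R -> R) a b : cont f -> cont g ->
  RInt (fun x => f x + g x) a b = RInt f a b + RInt g a b.
Proof. intros. apply (RInt_plus (V:=R_CompleteNormedModule)); apply ex_RInt_cont; auto. Qed.

Lemma RInt_minus_cont (f g : R -> R) a b : cont f -> cont g ->
  RInt (fun x => f x - g x) a b = RInt f a b - RInt g a b.
Proof. intros. apply (RInt_minus (V:=R_CompleteNormedModule)); apply ex_RInt_cont; auto. Qed.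

Lemma RInt_Chasles_cont (f : R -> R) a b c : cont f -> RInt f a b + RInt f b c = RInt f a c.
Proof. intros. apply (RInt_Chasles (V:=R_CompleteNormedModule)); apply ex_RInt_cont; auto. Qed.

Lemma RInt_ext_R (f g : R -> R) a b : (forall x, Rmin a b < x < Rmax a b -> f x = g x) ->
  RInt f a b = RInt g a b.
Proof. apply (RInt_ext (V:=R_CompleteNormedModule)). Qed.

Lemma RInt_reflect (h : R -> R) a b : cont h -> RInt h a b = RInt (fun y => h (- y)) (- b) (- a).
Proof.
  intros Hh.
  pose proof (RInt_comp_lin (V:=R_CompleteNormedModule) h (-1) 0 (-a) (-b)) as E.
  replace (-1 * - a + 0) with a in E by ring. replace (-1 * - b + 0) with b in E by ring.
  rewrite <- E by (apply ex_RInt_cont; auto).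
  rewrite (RInt_ext _ (fun y => - h (- y))).
  2:{ intros x _. unfold scal; simpl. unfold mult; simpl. replace (-1 * x + 0) with (- x) by ring. ring. }
  rewrite (RInt_opp (V:=R_CompleteNormedModule) (fun y => h (- y))).
  2:{ apply ex_RInt_cont. apply cont_comp_opp; auto. }
  apply (opp_RInt_swap (V:=R_CompleteNormedModule)). apply ex_RInt_cont. apply cont_comp_opp; auto.
Qed.

Lemma eq_of_is_derive_0 (F : R -> R) a b : (forall z, is_derive F z 0) -> F b = F a.
Proof.
  intros HF.
  assert (H : is_RInt (fun _ => 0) a b (minus (F b) (F a))).
  { apply (is_RInt_derive (V:=R_CompleteNormedModule)).
    intros; apply HF. intros; apply continuous_const. }
  apply (is_RInt_unique (V:=R_CompleteNormedModule)) in H.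
  rewrite (RInt_const (V:=R_CompleteNormedModule)) in H.
  unfold scal, minus, plus, opp, mult in H; simpl in H. unfold mult in H; simpl in H. lra.
Qed.

Definition lipschitz (K : R) (f : R -> R) := forall x y, Rabs (f x - f y) <= K * Rabs (x - y).

Lemma lipschitz_const_ge0 (K : R) f : lipschitz K f -> 0 <= K.
Proof.
  intros H. specialize (H 1 0). pose proof (Rabs_pos (f 1 - f 0)).
  replace (1 - 0) with 1 in H by ring. rewrite Rabs_R1 in H. lra.
Qed.

Lemma lipschitz_bound_ge0 K f : lipschitz K f -> 0 <= Rabs (f 0) + K.
Proof. intros H. pose proof (lipschitz_const_ge0 _ _ H). pose proof (Rabs_pos (f 0)). lra. Qed.

Lemma cont_lipschitz K f : lipschitz K f -> cont f.
Proof.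
  intros HL x. pose proof (lipschitz_const_ge0 _ _ HL) as HK.
  apply filterlim_locally. intros eps.
  assert (Hd : 0 < eps / (K + 1)). { apply Rdiv_lt_0_compat. apply cond_pos. lra. }
  exists (mkposreal _ Hd). intros y Hy.
  change (Rabs (f y - f x) < eps).
  change (Rabs (y - x) < eps / (K+1)) in Hy.
  eapply Rle_lt_trans. apply HL.
  apply Rle_lt_trans with ((K+1) * Rabs (y - x)).
  apply Rmult_le_compat_r. apply Rabs_pos. lra.
  apply Rmult_lt_reg_l with (/ (K+1)). apply Rinv_0_lt_compat; lra.
  rewrite <- Rmult_assoc, Rinv_l by lra. rewrite Rmult_1_l.
  unfold Rdiv in Hy. rewrite Rmult_comm. exact Hy.
Qed.

Lemma lipschitz_linear_growth K f y : lipschitz K f -> Rabs (f y) <= Rabs (f 0) + K * Rabs y.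
Proof.
  intros H. specialize (H y 0). replace (y - 0) with y in H by ring.
  pose proof (Rabs_triang_inv (f y) (f 0)). lra.
Qed.

Lemma lipschitz_comp_opp K f : lipschitz K f -> lipschitz K (fun y => f (- y)).
Proof.
  intros H x y. eapply Rle_trans. apply H.
  replace (- x - - y) with (- (x - y)) by ring. rewrite Rabs_Ropp. lra.
Qed.

Lemma lipschitz_const c : lipschitz 0 (fun _ : R => c).
Proof. intros x y. unfold Rminus. rewrite Rplus_opp_r, Rabs_R0. lra. Qed.

Lemma lipschitz_plus_const K f c : lipschitz K f -> lipschitz K (fun y => f y + c).
Proof. intros H x y. replace (f x + c - (f y + c)) with (f x - f y) by ring. apply H. Qed.

Lemma lipschitz_lin K1 K2 f g a b : lipschitz K1 f -> lipschitz K2 g ->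
  lipschitz (Rabs a * K1 + Rabs b * K2) (fun y => a * f y + b * g y).
Proof.
  intros H1 H2 x y.
  replace (a * f x + b * g x - (a * f y + b * g y))
    with (a * (f x - f y) + b * (g x - g y)) by ring.
  eapply Rle_trans. apply Rabs_triang. rewrite !Rabs_mult.
  pose proof (H1 x y). pose proof (H2 x y). pose proof (Rabs_pos a). pose proof (Rabs_pos b).
  rewrite Rmult_plus_distr_r. apply Rplus_le_compat.
  rewrite Rmult_assoc. apply Rmult_le_compat_l; auto.
  rewrite Rmult_assoc. apply Rmult_le_compat_l; auto.
Qed.

(** * The standard Gaussian density *)

Lemma sqrt_2PI_ge_1 : 1 <= sqrt (2 * PI).
Proof. rewrite <- sqrt_1. apply sqrt_le_1_alt. pose proof PI_RGT_0. pose proof PI2_1. lra. Qed.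

Lemma gauss_density_pos y : 0 < gauss_density y.
Proof.
  unfold gauss_density. apply Rdiv_lt_0_compat. apply exp_pos.
  pose proof sqrt_2PI_ge_1; lra.
Qed.

Lemma gauss_density_le_exp y : gauss_density y <= exp (- y ^ 2 / 2).
Proof.
  unfold gauss_density. pose proof sqrt_2PI_ge_1. pose proof (exp_pos (- y^2/2)).
  unfold Rdiv. rewrite <- (Rmult_1_r (exp _)) at 2.
  apply Rmult_le_compat_l. lra.
  rewrite <- Rinv_1. apply Rinv_le_contravar; lra.
Qed.

Lemma gauss_density_le_1 y : gauss_density y <= 1.
Proof.
  eapply Rle_trans. apply gauss_density_le_exp. rewrite <- exp_0.
  destruct (Req_dec y 0) as [->|Hy]. right. f_equal. field.
  left. apply exp_increasing. assert (0 < y ^ 2) by (apply pow2_gt_0; auto). lra.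
Qed.

Lemma gauss_density_opp y : gauss_density (- y) = gauss_density y.
Proof. unfold gauss_density. f_equal. f_equal. f_equal. ring. Qed.

Lemma cont_gauss_density : cont gauss_density.
Proof.
  apply cont_of_ex_derive. intros y. unfold gauss_density. auto_derive.
  pose proof sqrt_2PI_ge_1. lra.
Qed.

Lemma cont_gauss_density_mult f : cont f -> cont (fun y => gauss_density y * f y).
Proof. intros. apply cont_mult; auto. apply cont_gauss_density. Qed.

(* The density's derivative [- y exp (- y^2/2) / sqrt (2 PI)] is bounded by 1, since
   [|y| <= exp (y^2/2)]. *)
Lemma gauss_density_lipschitz : lipschitz 1 gauss_density.
Proof.
  intros x x'.
  set (df := fun y => - y * exp (- y ^ 2 / 2) / sqrt (2 * PI)).
  destruct (MVT_gen gauss_density x' x df) as [c [_ Hc]].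
  - intros y _. unfold df, gauss_density. auto_derive. pose proof sqrt_2PI_ge_1. lra.
    replace (- (y * (y * 1)) * / 2) with (- y ^ 2 / 2) by field. field. pose proof sqrt_2PI_ge_1.
    lra.
  - intros y _. apply continuity_pt_filterlim. apply cont_gauss_density.
  - rewrite Hc, Rabs_mult. apply Rmult_le_compat_r. apply Rabs_pos.
    unfold df. pose proof sqrt_2PI_ge_1. pose proof (exp_pos (- c^2/2)).
    unfold Rdiv. rewrite !Rabs_mult. rewrite (Rabs_pos_eq (exp _)) by lra.
    rewrite (Rabs_pos_eq (/ sqrt _)) by (left; apply Rinv_0_lt_compat; lra).
    assert (Rabs (- c) * exp (- c ^ 2 * / 2) <= 1).
    { rewrite Rabs_Ropp. replace (- c ^ 2 * / 2) with (- (c^2/2)) by field. rewrite exp_Ropp.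
      pose proof (exp_ineq1_le (c^2/2)). pose proof (exp_pos (c^2/2)).
      apply Rmult_le_reg_r with (exp (c^2/2)). auto. rewrite Rmult_assoc, Rinv_l by lra.
      assert (Rabs c * Rabs c = c ^ 2)
        by (rewrite <- Rabs_mult; simpl; rewrite Rmult_1_r; apply Rabs_pos_eq; nra).
      pose proof (Rabs_pos c). nra. }
    apply Rle_trans with (1 * 1). apply Rmult_le_compat; auto.
    apply Rmult_le_pos; [apply Rabs_pos | lra]. left; apply Rinv_0_lt_compat; lra.
    rewrite <- Rinv_1. apply Rinv_le_contravar; lra. lra.
Qed.

Definition gauss_decay (M : R) := exp (- M ^ 2 / 2).

Lemma gauss_decay_pos M : 0 < gauss_decay M.
Proof. apply exp_pos. Qed.

Lemma cont_id_mult_gauss_decay : cont (fun y => y * gauss_decay y).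
Proof. apply cont_of_ex_derive. intros. unfold gauss_decay. auto_derive. auto. Qed.

Lemma RInt_id_mult_gauss_decay M b :
  RInt (fun y => y * gauss_decay y) M b = gauss_decay M - gauss_decay b.
Proof.
  apply is_RInt_unique.
  replace (gauss_decay M - gauss_decay b) with
    (minus ((fun y => - gauss_decay y) b) ((fun y => - gauss_decay y) M))
    by (unfold minus, plus, opp; simpl; ring).
  apply (is_RInt_derive (V:=R_CompleteNormedModule) (fun y => - gauss_decay y)).
  - intros x _. unfold gauss_decay. auto_derive. auto.
    replace (- (x * (x * 1)) * / 2) with (- x ^ 2 / 2) by field. field.
  - intros x _. apply cont_id_mult_gauss_decay.
Qed.

Lemma exists_nat_gt (A : R) : exists n : nat, A < INR n /\ 1 <= INR n.
Proof.
  destruct (INR_archimed 1 (Rmax A 1)) as [n Hn]. lra.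
  exists n. rewrite Rmult_1_r in Hn. pose proof (Rmax_l A 1). pose proof (Rmax_r A 1). lra.
Qed.

Lemma gauss_decay_le_inv M : 1 <= M -> gauss_decay M <= 2 / M.
Proof.
  intros HM. unfold gauss_decay. replace (- M ^ 2 / 2) with (- (M^2/2)) by field.
  rewrite exp_Ropp. pose proof (exp_ineq1_le (M^2/2)).
  apply Rmult_le_reg_l with (exp (M^2/2)). apply exp_pos.
  rewrite Rinv_r by (apply Rgt_not_eq, exp_pos).
  apply Rmult_le_reg_r with M. lra.
  replace (exp (M ^ 2 / 2) * (2 / M) * M) with (2 * exp (M^2/2)) by (field; lra).
  assert (M <= 2 + M^2) by nra. lra.
Qed.

Lemma gauss_decay_small C eps : 0 <= C -> 0 < eps -> exists M, 1 <= M /\ C * gauss_decay M < eps.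
Proof.
  intros HC He. destruct (exists_nat_gt (2 * C / eps)) as [n [H1 H2]].
  exists (INR n). split; auto. pose proof (gauss_decay_le_inv _ H2).
  pose proof (gauss_decay_pos (INR n)).
  apply Rle_lt_trans with (C * (2 / INR n)). apply Rmult_le_compat_l; auto.
  assert (E1 : 2 * C = (2 * C / eps) * eps) by (field; lra).
  assert (2 * C < INR n * eps) by (rewrite E1; apply Rmult_lt_compat_r; auto).
  apply Rmult_lt_reg_r with (INR n). lra.
  replace (C * (2 / INR n) * INR n) with (2 * C) by (field; lra). lra.
Qed.

(* [exp (M^2/2) >= (M^2/6)^3], from [exp y >= y] applied three times. *)
Lemma gauss_decay_le_inv_pow6 M : 1 <= M -> gauss_decay M <= 216 / M ^ 6.
Proof.
  intros HM. unfold gauss_decay. replace (- M ^ 2 / 2) with (- (M^2/2)) by field.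
  rewrite exp_Ropp.
  assert (E : exp (M^2/2) = exp (M^2/6) * exp (M^2/6) * exp (M^2/6)).
  { rewrite <- !exp_plus. f_equal. field. }
  pose proof (exp_ineq1_le (M^2/6)).
  assert (H6 : M^6/216 <= exp (M^2/2)).
  { rewrite E. replace (M^6/216) with ((M^2/6)*(M^2/6)*(M^2/6)) by field.
    assert (0 <= M^2/6) by nra.
    apply Rmult_le_compat; try nra. }
  assert (0 < M^6) by (apply pow_lt; lra).
  apply Rmult_le_reg_l with (exp (M^2/2)). apply exp_pos.
  rewrite Rinv_r by (apply Rgt_not_eq, exp_pos).
  apply Rmult_le_reg_r with (M^6). auto.
  replace (exp (M ^ 2 / 2) * (216 / M^6) * M^6) with (216 * exp (M^2/2)) by (field; lra).
  nra.
Qed.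

Lemma sq_gauss_decay_le D M : 0 <= D -> 1 <= M -> D * (1 + M) ^ 2 * gauss_decay M <= 864 * D / M.
Proof.
  intros HD HM. pose proof (gauss_decay_le_inv_pow6 M HM). pose proof (gauss_decay_pos M).
  assert (0 < M^6) by (apply pow_lt; lra).
  apply Rle_trans with (D * (4 * M^2) * (216 / M^6)).
  apply Rmult_le_compat; try nra. apply Rmult_le_compat_l; nra.
  unfold Rdiv.
  replace (D * (4 * M ^ 2) * (216 * / M ^ 6)) with (864 * D / M * / M^3) by (field; lra).
  assert (1 <= M^3) by (replace 1 with (1^3) by ring; apply pow_incr; lra).
  assert (0 <= 864 * D / M)
    by (unfold Rdiv; apply Rmult_le_pos; [lra| left; apply Rinv_0_lt_compat; lra]).
  apply Rle_trans with (864 * D / M * 1). apply Rmult_le_compat_l; auto.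
  rewrite <- Rinv_1. apply Rinv_le_contravar; lra. lra.
Qed.

Lemma eq0_of_gauss_decay_bound x D :
  (forall M, 1 <= M -> Rabs x <= D * (1 + M) ^ 2 * gauss_decay M) -> x = 0.
Proof.
  intros H. destruct (Req_dec x 0) as [|Hx]; auto. exfalso.
  assert (Hpos : 0 < Rabs x) by (apply Rabs_pos_lt; auto).
  assert (HD : 0 <= D).
  { pose proof (H 1 (Rle_refl 1)). pose proof (gauss_decay_pos 1).
    destruct (Rle_dec 0 D); auto. exfalso.
    assert (D * (1+1)^2 * gauss_decay 1 < 0). { apply Rmult_neg_pos. nra. auto. } lra. }
  destruct (exists_nat_gt (864 * D / Rabs x)) as [n [Hn1 Hn2]].
  pose proof (H (INR n) Hn2). pose proof (sq_gauss_decay_le D (INR n) HD Hn2).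
  assert (864 * D / INR n < Rabs x).
  { assert (E1 : 864 * D = (864 * D / Rabs x) * Rabs x) by (field; lra).
    assert (864 * D < INR n * Rabs x) by (rewrite E1; apply Rmult_lt_compat_r; auto).
    apply Rmult_lt_reg_r with (INR n). lra.
    replace (864 * D / INR n * INR n) with (864 * D) by (field; lra). lra. }
  lra.
Qed.

(** * The Gaussian mean of a Lipschitz function *)

Definition gauss_RInt (f : R -> R) (a b : R) := RInt (fun y => gauss_density y * f y) a b.

Lemma gauss_RInt_reflect K f a b : lipschitz K f -> gauss_RInt f a b
  = gauss_RInt (fun y => f (- y)) (- b) (- a).
Proof.
  intros HL. unfold gauss_RInt.
  rewrite RInt_reflect by (apply cont_gauss_density_mult, (cont_lipschitz _ _ HL)).
  apply RInt_ext_R. intros. rewrite gauss_density_opp. auto.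
Qed.

Lemma gauss_RInt_right_tail K f M b : lipschitz K f -> 1 <= M -> M <= b ->
  Rabs (gauss_RInt f M b) <= (Rabs (f 0) + K) * gauss_decay M.
Proof.
  intros HL HM Hb. pose proof (lipschitz_const_ge0 _ _ HL) as HK.
  pose proof (cont_lipschitz _ _ HL) as Hc.
  unfold gauss_RInt. eapply Rle_trans. apply abs_RInt_le_cont; auto.
  apply cont_gauss_density_mult; auto.
  eapply Rle_trans.
  apply RInt_le_cont with (g := fun y => (Rabs (f 0) + K) * (y * gauss_decay y)); auto.
  apply cont_abs, cont_gauss_density_mult; auto. apply cont_mult. apply cont_const.
  apply cont_id_mult_gauss_decay.
  - intros y Hy.
    rewrite Rabs_mult, (Rabs_pos_eq (gauss_density y)) by (left; apply gauss_density_pos).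
    pose proof (lipschitz_linear_growth _ _ y HL). rewrite (Rabs_pos_eq y) in H by lra.
    pose proof (gauss_density_le_exp y). pose proof (gauss_density_pos y). unfold gauss_decay.
    pose proof (exp_pos (- y^2/2)). pose proof (Rabs_pos (f 0)).
    apply Rle_trans with (exp (- y ^ 2 / 2) * (Rabs (f 0) + K * y)).
    apply Rmult_le_compat; try lra. apply Rabs_pos.
    replace ((Rabs (f 0) + K) * (y * exp (- y ^ 2 / 2)))
      with (exp (- y ^ 2 / 2) * ((Rabs (f 0) + K) * y)) by ring.
    apply Rmult_le_compat_l. lra. nra.
  - rewrite RInt_scal_cont by apply cont_id_mult_gauss_decay. rewrite RInt_id_mult_gauss_decay.
    pose proof (gauss_decay_pos b). pose proof (Rabs_pos (f 0)). nra.
Qed.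

Lemma gauss_RInt_left_tail K f M a : lipschitz K f -> 1 <= M -> a <= - M ->
  Rabs (gauss_RInt f a (- M)) <= (Rabs (f 0) + K) * gauss_decay M.
Proof.
  intros HL HM Ha. rewrite (gauss_RInt_reflect K) by auto. rewrite Ropp_involutive.
  replace (f 0) with ((fun y => f (- y)) 0) by (simpl; rewrite Ropp_0; auto).
  apply gauss_RInt_right_tail; auto. apply lipschitz_comp_opp; auto. lra.
Qed.

Lemma gauss_RInt_tails K f M a b : lipschitz K f -> 1 <= M -> a <= - M -> M <= b ->
  Rabs (gauss_RInt f a b - gauss_RInt f (- M) M) <= 2 * ((Rabs (f 0) + K) * gauss_decay M).
Proof.
  intros HL HM Ha Hb. pose proof (cont_gauss_density_mult _ (cont_lipschitz _ _ HL)) as Hc.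
  pose proof (gauss_RInt_right_tail K f M b HL HM Hb).
  pose proof (gauss_RInt_left_tail K f M a HL HM Ha).
  unfold gauss_RInt in *.
  rewrite <- (RInt_Chasles_cont _ a (- M) b Hc), <- (RInt_Chasles_cont _ (- M) M b Hc).
  match goal with |- Rabs (?l + (?c + ?r) - ?c) <= _ => replace (l + (c + r) - c) with (l + r) by ring end.
  eapply Rle_trans. apply Rabs_triang. lra.
Qed.

Lemma gauss_RInt_lin K1 K2 f g a b u v : lipschitz K1 f -> lipschitz K2 g ->
  gauss_RInt (fun y => a * f y + b * g y) u v = a * gauss_RInt f u v + b * gauss_RInt g u v.
Proof.
  intros H1 H2.
  pose proof (cont_gauss_density_mult _ (cont_lipschitz _ _ H1)).
  pose proof (cont_gauss_density_mult _ (cont_lipschitz _ _ H2)).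
  unfold gauss_RInt.
  rewrite (RInt_ext_R _ (fun y => a * (gauss_density y * f y) + b * (gauss_density y * g y)))
    by (intros; ring).
  rewrite RInt_plus_cont, !RInt_scal_cont; auto; apply cont_mult; auto; apply cont_const.
Qed.

(* The mean is defined as the limit of the symmetric truncations, which exists for Lipschitz [f]
   by the tail bound; junk value [0] otherwise. *)
Definition sym_gauss_RInt (f : R -> R) (n : nat) := gauss_RInt f (- INR n) (INR n).
Definition gauss_mean (f : R -> R) : R := real (Lim_seq (sym_gauss_RInt f)).

Lemma sym_gauss_RInt_cauchy K f : lipschitz K f -> ex_lim_seq_cauchy (sym_gauss_RInt f).
Proof.
  intros HL eps. set (C := Rabs (f 0) + K).
  assert (HC : 0 <= C) by apply (lipschitz_bound_ge0 _ _ HL).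
  destruct (exists_nat_gt (8 * C / eps)) as [N [HN1 HN2]].
  exists N. intros n m Hn Hm.
  assert (Hn' : INR N <= INR n) by (apply le_INR; auto).
  assert (Hm' : INR N <= INR m) by (apply le_INR; auto).
  pose proof (gauss_RInt_tails K f (INR N) (- INR n) (INR n) HL HN2 ltac:(lra) ltac:(lra)).
  pose proof (gauss_RInt_tails K f (INR N) (- INR m) (INR m) HL HN2 ltac:(lra) ltac:(lra)).
  fold C in H, H0. unfold sym_gauss_RInt.
  pose proof (gauss_decay_le_inv _ HN2).
  set (I := gauss_RInt f (- INR N) (INR N)) in *.
  assert (Habs : Rabs (gauss_RInt f (- INR n) (INR n) - gauss_RInt f (- INR m) (INR m))
                 <= 4 * C * gauss_decay (INR N)).
  { replace (gauss_RInt f (- INR n) (INR n) - gauss_RInt f (- INR m) (INR m)) with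
      ((gauss_RInt f (- INR n) (INR n) - I) - (gauss_RInt f (- INR m) (INR m) - I)) by ring.
    eapply Rle_trans. apply Rabs_triang. rewrite Rabs_Ropp. lra. }
  eapply Rle_lt_trans. apply Habs.
  apply Rle_lt_trans with (4 * C * (2 / INR N)). apply Rmult_le_compat_l; lra.
  destruct eps as [e He]; simpl in *.
  assert (E1 : 8 * C = (8 * C / e) * e) by (field; lra).
  assert (8 * C < INR N * e) by (rewrite E1; apply Rmult_lt_compat_r; auto).
  apply Rmult_lt_reg_r with (INR N). lra.
  replace (4 * C * (2 / INR N) * INR N) with (8 * C) by (field; lra). lra.
Qed.

Lemma is_lim_gauss_mean K f : lipschitz K f -> is_lim_seq (sym_gauss_RInt f) (gauss_mean f).
Proof.
  intros HL. destruct (proj2 (ex_lim_seq_cauchy_corr _) (sym_gauss_RInt_cauchy K f HL)) as [l Hl].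
  unfold gauss_mean. rewrite (is_lim_seq_unique _ _ Hl). exact Hl.
Qed.

Lemma gauss_mean_truncation K f M : lipschitz K f -> 1 <= M ->
  Rabs (gauss_mean f - gauss_RInt f (- M) M) <= 2 * ((Rabs (f 0) + K) * gauss_decay M).
Proof.
  intros HL HM. destruct (exists_nat_gt M) as [N [HN _]].
  set (I := gauss_RInt f (- M) M).
  assert (Hlim : is_lim_seq (fun n => Rabs (sym_gauss_RInt f n - I)) (Rabs (gauss_mean f - I))).
  { apply (is_lim_seq_abs _ (gauss_mean f - I)).
    apply is_lim_seq_minus'. apply (is_lim_gauss_mean K f HL). apply is_lim_seq_const. }
  apply (is_lim_seq_le_loc _ (fun _ => 2 * ((Rabs (f 0) + K) * gauss_decay M)) _ _)
    with (2 := Hlim) (3 := is_lim_seq_const _).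
  exists N. intros n Hn. assert (INR N <= INR n) by (apply le_INR; auto).
  unfold sym_gauss_RInt. apply gauss_RInt_tails; auto; lra.
Qed.

Lemma gauss_mean_charac K f L D : lipschitz K f ->
  (forall M, 1 <= M -> Rabs (L - gauss_RInt f (- M) M) <= D * (1 + M) ^ 2 * gauss_decay M) ->
  L = gauss_mean f.
Proof.
  intros HL H. assert (L - gauss_mean f = 0); [|lra].
  apply (eq0_of_gauss_decay_bound _ (D + 2 * (Rabs (f 0) + K))). intros M HM.
  pose proof (H M HM). pose proof (gauss_mean_truncation K f M HL HM).
  pose proof (lipschitz_bound_ge0 _ _ HL).
  pose proof (gauss_decay_pos M). assert (1 <= (1 + M)^2) by nra.
  replace (L - gauss_mean f) with
    ((L - gauss_RInt f (- M) M) - (gauss_mean f - gauss_RInt f (- M) M)) by ring.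
  eapply Rle_trans. apply Rabs_triang. rewrite Rabs_Ropp.
  assert (2 * ((Rabs (f 0) + K) * gauss_decay M) <= 2 * (Rabs (f 0) + K) * (1 + M) ^ 2 * gauss_decay M).
  { replace (2 * ((Rabs (f 0) + K) * gauss_decay M)) with (2 * (Rabs (f 0) + K) * 1 * gauss_decay M) by ring.
    apply Rmult_le_compat_r. lra. apply Rmult_le_compat_l; lra. }
  lra.
Qed.

Lemma gauss_mean_lin K1 K2 f g a b : lipschitz K1 f -> lipschitz K2 g ->
  gauss_mean (fun y => a * f y + b * g y) = a * gauss_mean f + b * gauss_mean g.
Proof.
  intros H1 H2. symmetry.
  apply (gauss_mean_charac _ _ _ (2 * (Rabs a * (Rabs (f 0) + K1) + Rabs b * (Rabs (g 0) + K2)))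
           (lipschitz_lin _ _ _ _ _ _ H1 H2)).
  intros M HM. rewrite (gauss_RInt_lin K1 K2) by auto.
  pose proof (gauss_mean_truncation _ _ M H1 HM). pose proof (gauss_mean_truncation _ _ M H2 HM).
  pose proof (lipschitz_bound_ge0 _ _ H1). pose proof (lipschitz_bound_ge0 _ _ H2).
  pose proof (gauss_decay_pos M).
  pose proof (Rabs_pos a). pose proof (Rabs_pos b).
  replace (a * gauss_mean f + b * gauss_mean g - (a * gauss_RInt f (- M) M + b * gauss_RInt g (- M) M)) with
    (a * (gauss_mean f - gauss_RInt f (- M) M) + b * (gauss_mean g - gauss_RInt g (- M) M)) by ring.
  eapply Rle_trans. apply Rabs_triang. rewrite !Rabs_mult.
  assert (1 <= (1 + M)^2) by nra.
  apply Rle_trans with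
    (2 * (Rabs a * (Rabs (f 0) + K1) + Rabs b * (Rabs (g 0) + K2)) * 1 * gauss_decay M).
  2:{ apply Rmult_le_compat_r. lra. apply Rmult_le_compat_l; try lra.
      apply Rmult_le_pos. lra. apply Rplus_le_le_0_compat; apply Rmult_le_pos; lra. }
  assert (Rabs a * Rabs (gauss_mean f - gauss_RInt f (- M) M)
          <= Rabs a * (2 * ((Rabs (f 0) + K1) * gauss_decay M))) by (apply Rmult_le_compat_l; auto).
  assert (Rabs b * Rabs (gauss_mean g - gauss_RInt g (- M) M)
          <= Rabs b * (2 * ((Rabs (g 0) + K2) * gauss_decay M))) by (apply Rmult_le_compat_l; auto).
  lra.
Qed.

Lemma gauss_mean_le K1 K2 f g : lipschitz K1 f -> lipschitz K2 g ->
  (forall y, f y <= g y) -> gauss_mean f <= gauss_mean g.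
Proof.
  intros H1 H2 Hle.
  refine (is_lim_seq_le _ _ _ _ _ (is_lim_gauss_mean _ _ H1) (is_lim_gauss_mean _ _ H2)).
  intros n. unfold sym_gauss_RInt, gauss_RInt. apply RInt_le_cont.
  pose proof (pos_INR n). lra.
  apply cont_gauss_density_mult, (cont_lipschitz _ _ H1).
  apply cont_gauss_density_mult, (cont_lipschitz _ _ H2).
  intros. apply Rmult_le_compat_l. left; apply gauss_density_pos. auto.
Qed.

Lemma gauss_mean_ext f g : (forall y, f y = g y) -> gauss_mean f = gauss_mean g.
Proof. intros H. apply functional_extensionality in H. subst. auto. Qed.

Lemma gauss_mean_improper_int K f : lipschitz K f ->
  improper_int (fun y => gauss_density y * f y) (gauss_mean f).
Proof.
  intros HL eps Heps. pose proof (lipschitz_bound_ge0 _ _ HL) as HC.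
  destruct (gauss_decay_small (4 * (Rabs (f 0) + K)) eps) as [M [HM1 HM2]]; auto. lra.
  exists M. intros a b Ha Hb.
  assert (Hex : ex_RInt (fun y => gauss_density y * f y) a b).
  { apply ex_RInt_cont. apply cont_gauss_density_mult, (cont_lipschitz _ _ HL). }
  exists (ex_RInt_Reals_0 _ _ _ Hex). rewrite <- RInt_Reals. fold (gauss_RInt f a b).
  pose proof (gauss_RInt_tails K f M a b HL HM1 Ha Hb).
  pose proof (gauss_mean_truncation K f M HL HM1).
  replace (gauss_RInt f a b - gauss_mean f) with
    ((gauss_RInt f a b - gauss_RInt f (- M) M) - (gauss_mean f - gauss_RInt f (- M) M)) by ring.
  eapply Rle_lt_trans. apply Rabs_triang. rewrite Rabs_Ropp. lra.
Qed.

Lemma improper_int_gauss_mean K f L : lipschitz K f ->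
  improper_int (fun y => gauss_density y * f y) L -> L = gauss_mean f.
Proof.
  intros HL Himp. apply Rminus_diag_uniq.
  destruct (Req_dec (L - gauss_mean f) 0) as [|Hne]; auto. exfalso.
  set (eps := Rabs (L - gauss_mean f)).
  assert (Heps : 0 < eps) by (apply Rabs_pos_lt; auto).
  pose proof (lipschitz_bound_ge0 _ _ HL) as HC.
  destruct (Himp (eps / 2)) as [M0 HM0]. lra.
  destruct (gauss_decay_small (2 * (Rabs (f 0) + K)) (eps / 2)) as [M1 [HM1 HM1']]; try lra.
  set (M := Rmax M1 (Rabs M0)).
  pose proof (Rmax_l M1 (Rabs M0)). pose proof (Rmax_r M1 (Rabs M0)). pose proof (Rle_abs M0).
  fold M in H, H0.
  destruct (HM0 (- M) M) as [pr Hpr]; try lra.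
  rewrite <- RInt_Reals in Hpr. fold (gauss_RInt f (- M) M) in Hpr.
  pose proof (gauss_mean_truncation K f M HL ltac:(lra)).
  assert (gauss_decay M <= gauss_decay M1).
  { unfold gauss_decay. destruct (Req_dec M M1) as [E|E]. rewrite E; lra.
    left. apply exp_increasing. assert (M1 < M) by lra. nra. }
  assert (2 * ((Rabs (f 0) + K) * gauss_decay M) < eps / 2).
  { apply Rle_lt_trans with (2 * (Rabs (f 0) + K) * gauss_decay M1); auto.
    rewrite <- Rmult_assoc. apply Rmult_le_compat_l; lra. }
  assert (Rabs (L - gauss_mean f) < eps); [|unfold eps in *; lra].
  replace (L - gauss_mean f) with
    (- (gauss_RInt f (- M) M - L) - (gauss_mean f - gauss_RInt f (- M) M)) by ring.
  eapply Rle_lt_trans. apply Rabs_triang. rewrite !Rabs_Ropp. lra.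
Qed.

(** * Normalisation of the Gaussian density *)

(* The classical computation of [int_0^oo exp (- t^2) = sqrt PI / 2]: with
   [G x = int_0^x exp (- t^2)] and [U x = int_0^1 exp (- x^2 (1 + t^2)) / (1 + t^2)],
   [G^2 + U] has zero derivative, equals [atan 1 = PI / 4] at [0], and [U x <= exp (- x^2)]. *)
Definition gauss_kernel (t : R) := exp (- (t * t)).
Definition gauss_prim (x : R) := RInt gauss_kernel 0 x.
Definition gauss_aux_integrand (u t : R) := exp (- (u * u) * (1 + t * t)) / (1 + t * t).
Definition gauss_aux (x : R) := RInt (fun t => gauss_aux_integrand x t) 0 1.

Lemma cont_gauss_kernel : cont gauss_kernel.
Proof. apply cont_of_ex_derive. intros; unfold gauss_kernel; auto_derive; auto. Qed.

Lemma cont_gauss_aux_integrand x : cont (gauss_aux_integrand x).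
Proof. apply cont_of_ex_derive. intros; unfold gauss_aux_integrand; auto_derive. nra. Qed.

Lemma is_derive_gauss_prim x : is_derive gauss_prim x (gauss_kernel x).
Proof.
  apply (is_derive_RInt (V:=R_CompleteNormedModule) gauss_kernel gauss_prim 0 x).
  apply filter_forall. intros b. apply RInt_correct. apply ex_RInt_cont, cont_gauss_kernel.
  apply cont_gauss_kernel.
Qed.

Lemma is_derive_gauss_aux_integrand u t :
  is_derive (fun z => gauss_aux_integrand z t) u (- 2 * u * exp (- (u * u) * (1 + t * t))).
Proof.
  unfold gauss_aux_integrand. auto_derive. nra. field. nra.
Qed.

Lemma continuity_2d_gauss_aux_integrand_derive x t :
  continuity_2d_pt (fun u v => - 2 * u * exp (- (u * u) * (1 + v * v))) x t.
Proof.
  apply continuity_2d_pt_mult.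
  apply continuity_2d_pt_mult. apply continuity_2d_pt_const. apply continuity_2d_pt_id1.
  apply (continuity_1d_2d_pt_comp exp (fun u v => - (u * u) * (1 + v * v))).
  apply derivable_continuous_pt, derivable_pt_exp.
  apply continuity_2d_pt_mult. apply continuity_2d_pt_opp.
  apply continuity_2d_pt_mult; apply continuity_2d_pt_id1.
  apply continuity_2d_pt_plus. apply continuity_2d_pt_const.
  apply continuity_2d_pt_mult; apply continuity_2d_pt_id2.
Qed.

Lemma is_derive_gauss_aux x : is_derive gauss_aux x (- 2 * gauss_kernel x * gauss_prim x).
Proof.
  unfold gauss_aux.
  pose proof (is_derive_RInt_param gauss_aux_integrand 0 1 x) as H.
  assert (E : RInt (fun t => Derive (fun u => gauss_aux_integrand u t) x) 0 1
              = - 2 * gauss_kernel x * gauss_prim x).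
  { rewrite (RInt_ext_R _ (fun t => - 2 * gauss_kernel x * (x * gauss_kernel (x * t + 0)))).
    2:{ intros t _.
        replace (Derive (fun u => gauss_aux_integrand u t) x)
          with (- 2 * x * exp (- (x * x) * (1 + t * t)))
          by (symmetry; apply is_derive_unique; apply is_derive_gauss_aux_integrand).
          unfold gauss_kernel.
        replace (- (x * x) * (1 + t * t)) with (- (x * x) + - ((x * t + 0) * (x * t + 0))) by ring.
        rewrite exp_plus. ring. }
    rewrite RInt_scal_cont.
    2:{ apply cont_mult. apply cont_const. intros y.
        apply (@continuous_comp R_UniformSpace R_UniformSpace R_UniformSpace
                 (fun t => x * t + 0) gauss_kernel).
        apply (cont_plus (fun t => x * t) (fun _ => 0)). apply cont_mult. apply cont_const.
        apply cont_id.
        apply cont_const. apply cont_gauss_kernel. }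
    f_equal. unfold gauss_prim.
    pose proof (RInt_comp_lin (V:=R_CompleteNormedModule) gauss_kernel x 0 0 1) as E2.
    rewrite Rmult_0_r, Rplus_0_r, Rmult_1_r, Rplus_0_r in E2.
    rewrite <- E2. apply RInt_ext_R. intros. reflexivity.
    apply ex_RInt_cont, cont_gauss_kernel. }
  rewrite <- E. apply H.
  - apply filter_forall. intros x0 t _. eexists. apply is_derive_gauss_aux_integrand.
  - intros t _. eapply continuity_2d_pt_ext.
    2: apply (continuity_2d_gauss_aux_integrand_derive x t).
    intros u v. symmetry. apply is_derive_unique. apply is_derive_gauss_aux_integrand.
  - apply filter_forall. intros y. apply ex_RInt_cont. apply cont_gauss_aux_integrand.
Qed.

Lemma gauss_prim_sq_plus_aux x : gauss_prim x * gauss_prim x + gauss_aux x = PI / 4.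
Proof.
  set (F := fun z => gauss_prim z * gauss_prim z + gauss_aux z).
  assert (HF : forall z, is_derive F z 0).
  { intros z. unfold F.
    apply (is_derive_ext (fun z => plus (mult (gauss_prim z) (gauss_prim z)) (gauss_aux z))).
    intros; reflexivity.
    replace 0 with (plus (plus (mult (gauss_kernel z) (gauss_prim z)) (mult (gauss_prim z) (gauss_kernel z)))
                         (- 2 * gauss_kernel z * gauss_prim z))
      by (unfold plus, mult; simpl; ring).
    apply (is_derive_plus (K:=R_AbsRing) (V:=R_NormedModule)).
    apply (is_derive_mult (K:=R_AbsRing)); try apply is_derive_gauss_prim. intros; apply Rmult_comm.
    apply is_derive_gauss_aux. }
  assert (E0 : F 0 = PI / 4).
  { unfold F, gauss_prim. rewrite RInt_point. unfold zero; simpl. rewrite Rmult_0_l, Rplus_0_l.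
    unfold gauss_aux, gauss_aux_integrand. rewrite (RInt_ext_R _ (fun t => / (1 + t ^ 2))).
    2:{ intros t _. replace (- (0 * 0) * (1 + t * t)) with 0 by ring. rewrite exp_0.
        unfold Rdiv. rewrite Rmult_1_l. f_equal. ring. }
    apply is_RInt_unique.
    replace (PI / 4) with (minus (atan 1) (atan 0))
      by (rewrite atan_1, atan_0; unfold minus, plus, opp; simpl; ring).
    apply (is_RInt_derive (V:=R_CompleteNormedModule) atan).
    - intros t _. apply is_derive_Reals. apply derivable_pt_lim_atan.
    - intros t _. apply continuous_of_ex_derive. auto_derive. nra. }
  rewrite <- E0. exact (eq_of_is_derive_0 F 0 x HF).
Qed.

Lemma gauss_aux_bounds x : 0 <= gauss_aux x <= exp (- (x * x)).
Proof.
  unfold gauss_aux. split.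
  - apply RInt_ge_0. lra. apply ex_RInt_cont, cont_gauss_aux_integrand.
    intros t _. unfold gauss_aux_integrand. apply Rlt_le, Rdiv_lt_0_compat. apply exp_pos. nra.
  - apply Rle_trans with (RInt (fun _ => exp (- (x * x))) 0 1).
    apply RInt_le_cont. lra. apply cont_gauss_aux_integrand. apply cont_const.
    intros t _. unfold gauss_aux_integrand. pose proof (exp_pos (- (x * x) * (1 + t * t))).
    assert (exp (- (x * x) * (1 + t * t)) <= exp (- (x * x))).
    { destruct (Req_dec (x*x*(t*t)) 0) as [E|E].
      replace (- (x * x) * (1 + t * t)) with (- (x*x)) by nra. lra.
      left. apply exp_increasing. nra. }
    unfold Rdiv. apply Rle_trans with (exp (- (x * x) * (1 + t * t)) * 1).
    apply Rmult_le_compat_l. lra. rewrite <- Rinv_1. apply Rinv_le_contravar; nra. lra.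
    rewrite (RInt_const (V:=R_CompleteNormedModule)). unfold scal; simpl. unfold mult; simpl. lra.
Qed.

Lemma gauss_prim_ge0 x : 0 <= x -> 0 <= gauss_prim x.
Proof.
  intros Hx. apply RInt_ge_0; auto. apply ex_RInt_cont, cont_gauss_kernel.
  intros. unfold gauss_kernel. left; apply exp_pos.
Qed.

Lemma sqrt_PI_gt_1 : 1 < sqrt PI.
Proof. rewrite <- sqrt_1. apply sqrt_lt_1_alt. pose proof PI_RGT_0. pose proof PI2_1. lra. Qed.

Lemma gauss_prim_close x : 0 <= x -> Rabs (gauss_prim x - sqrt PI / 2) <= 2 * exp (- (x * x)).
Proof.
  intros Hx. pose proof (gauss_prim_sq_plus_aux x). pose proof (gauss_aux_bounds x).
  pose proof (gauss_prim_ge0 x Hx).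
  pose proof sqrt_PI_gt_1. pose proof (sqrt_sqrt PI (Rlt_le _ _ PI_RGT_0)).
  set (s := sqrt PI) in *. set (G := gauss_prim x) in *.
  assert (E : (G - s / 2) * (G + s / 2) = - gauss_aux x) by nra.
  destruct (Rle_dec (s/2) G).
  - rewrite Rabs_pos_eq by lra. nra.
  - rewrite Rabs_left by lra. nra.
Qed.

Lemma sqrt_2_pos : 0 < sqrt 2.
Proof. apply sqrt_lt_R0. lra. Qed.

Lemma gauss_RInt_one M : 0 <= M -> gauss_RInt (fun _ => 1) (- M) M
  = 2 / sqrt PI * gauss_prim (M / sqrt 2).
Proof.
  intros HM. set (h := fun y => exp (- y ^ 2 / 2)).
  assert (Ch : cont h). { apply cont_of_ex_derive. intros. unfold h. auto_derive. auto. }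
  unfold gauss_RInt. rewrite (RInt_ext_R _ (fun y => / sqrt (2 * PI) * h y)).
  2:{ intros. unfold gauss_density, h. unfold Rdiv. ring. }
  rewrite RInt_scal_cont by auto.
  rewrite <- (RInt_Chasles_cont h (- M) 0 M Ch).
  rewrite (RInt_reflect h (- M) 0 Ch). rewrite Ropp_0, Ropp_involutive.
  rewrite (RInt_ext_R (fun y => h (- y)) h). 2:{ intros. unfold h. f_equal. f_equal. ring. }
  pose proof (RInt_comp_lin (V:=R_CompleteNormedModule) h (sqrt 2) 0 0 (M / sqrt 2)) as E2.
  rewrite Rmult_0_r, Rplus_0_r, Rplus_0_r in E2.
  replace (sqrt 2 * (M / sqrt 2)) with M in E2 by (pose proof sqrt_2_pos; field; lra).
  rewrite <- E2 by (apply ex_RInt_cont; auto).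
  rewrite (RInt_ext_R _ (fun t => sqrt 2 * gauss_kernel t)).
  2:{ intros. unfold scal; simpl; unfold mult; simpl. unfold h, gauss_kernel. rewrite Rplus_0_r.
      f_equal. f_equal. simpl. rewrite Rmult_1_r.
      replace (sqrt 2 * x * (sqrt 2 * x)) with ((sqrt 2 * sqrt 2) * (x * x)) by ring.
      rewrite sqrt_sqrt by lra. field. }
  rewrite RInt_scal_cont by apply cont_gauss_kernel. fold (gauss_prim (M / sqrt 2)).
  rewrite sqrt_mult by (pose proof PI_RGT_0; lra).
  pose proof sqrt_2_pos. pose proof sqrt_PI_gt_1.
  change (/ (sqrt 2 * sqrt PI) * (sqrt 2 * gauss_prim (M / sqrt 2) + sqrt 2 * gauss_prim (M / sqrt 2))
          = 2 / sqrt PI * gauss_prim (M / sqrt 2)).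
  field. lra.
Qed.

Lemma gauss_mean_one : gauss_mean (fun _ => 1) = 1.
Proof.
  symmetry. apply (gauss_mean_charac 0 _ _ 4).
  - apply lipschitz_const.
  - intros M HM. rewrite gauss_RInt_one by lra.
    pose proof (gauss_prim_close (M / sqrt 2)). pose proof sqrt_2_pos. pose proof sqrt_PI_gt_1.
    assert (E : M / sqrt 2 * (M / sqrt 2) = M ^ 2 / 2).
    { unfold Rdiv. replace (M * / sqrt 2 * (M * / sqrt 2)) with (M * M * / (sqrt 2 * sqrt 2)) by (field; lra).
      rewrite sqrt_sqrt by lra. simpl. field. }
    rewrite E in H. replace (- (M ^ 2 / 2)) with (- M ^ 2 / 2) in H by field.
    fold (gauss_decay M) in H.
    assert (0 <= M / sqrt 2) by (unfold Rdiv; apply Rmult_le_pos; [lra | left; apply Rinv_0_lt_compat; lra]).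
    specialize (H H2).
    replace (1 - 2 / sqrt PI * gauss_prim (M / sqrt 2))
      with (- (2 / sqrt PI) * (gauss_prim (M / sqrt 2) - sqrt PI / 2))
      by (field; lra).
    rewrite Rabs_mult, Rabs_Ropp, Rabs_pos_eq
      by (unfold Rdiv; apply Rmult_le_pos; [lra| left; apply Rinv_0_lt_compat; lra]).
    pose proof (gauss_decay_pos M). assert (1 <= (1 + M)^2) by nra.
    apply Rle_trans with (2 / sqrt PI * (2 * gauss_decay M)).
    apply Rmult_le_compat_l; auto.
    unfold Rdiv; apply Rmult_le_pos; [lra| left; apply Rinv_0_lt_compat; lra].
    assert (2 / sqrt PI <= 2).
    { unfold Rdiv. apply Rle_trans with (2 * 1). apply Rmult_le_compat_l. lra.
      rewrite <- Rinv_1. apply Rinv_le_contravar; lra. lra. }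
    apply Rle_trans with (2 * (2 * gauss_decay M)). apply Rmult_le_compat_r; lra.
    replace (2 * (2 * gauss_decay M)) with (4 * 1 * gauss_decay M) by ring.
    apply Rmult_le_compat_r. lra. apply Rmult_le_compat_l; lra.
Qed.

Lemma gauss_mean_const c : gauss_mean (fun _ => c) = c.
Proof.
  rewrite (gauss_mean_ext _ (fun y => c * 1 + 0 * 1)) by (intros; ring).
  rewrite (gauss_mean_lin 0 0 _ _ c 0 (lipschitz_const 1) (lipschitz_const 1)), gauss_mean_one.
  ring.
Qed.

Lemma gauss_mean_plus_const K f c : lipschitz K f -> gauss_mean (fun y => f y + c)
  = gauss_mean f + c.
Proof.
  intros HL. rewrite (gauss_mean_ext _ (fun y => 1 * f y + c * 1)) by (intros; ring).
  rewrite (gauss_mean_lin K 0 f (fun _ => 1) 1 c HL (lipschitz_const 1)), gauss_mean_one. ring.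
Qed.

(** * Fubini's theorem for Lipschitz functions of two variables *)

Definition lipschitz2 (K : R) (H : R -> R -> R) :=
  forall x y x' y', Rabs (H x y - H x' y') <= K * (Rabs (x - x') + Rabs (y - y')).

Lemma lipschitz2_const_ge0 K H : lipschitz2 K H -> 0 <= K.
Proof.
  intros HL. specialize (HL 1 0 0 0). pose proof (Rabs_pos (H 1 0 - H 0 0)).
  replace (1 - 0) with 1 in HL by ring. replace (0 - 0) with 0 in HL by ring.
  rewrite Rabs_R1, Rabs_R0 in HL. lra.
Qed.

Lemma lipschitz2_l K H y : lipschitz2 K H -> lipschitz K (fun x => H x y).
Proof.
  intros HL x x'. eapply Rle_trans. apply HL. unfold Rminus at 2. rewrite Rplus_opp_r, Rabs_R0.
  rewrite Rplus_0_r. lra.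
Qed.

Lemma lipschitz2_r K H x : lipschitz2 K H -> lipschitz K (fun y => H x y).
Proof.
  intros HL y y'. eapply Rle_trans. apply HL. unfold Rminus at 1. rewrite Rplus_opp_r, Rabs_R0.
  rewrite Rplus_0_l. lra.
Qed.

Lemma lipschitz2_swap K H : lipschitz2 K H -> lipschitz2 K (fun x y => H y x).
Proof. intros HL x y x' y'. eapply Rle_trans. apply HL. lra. Qed.

Lemma lipschitz2_continuity_2d K H x y : lipschitz2 K H -> continuity_2d_pt H x y.
Proof.
  intros HL eps. pose proof (lipschitz2_const_ge0 _ _ HL).
  assert (Hd : 0 < eps / (2 * (K + 1))). { apply Rdiv_lt_0_compat. apply cond_pos. lra. }
  exists (mkposreal _ Hd). intros u v Hu Hv. simpl in Hu, Hv.
  eapply Rle_lt_trans. apply HL.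
  apply Rle_lt_trans with ((K + 1) * (Rabs (u - x) + Rabs (v - y))).
  apply Rmult_le_compat_r. pose proof (Rabs_pos (u - x)); pose proof (Rabs_pos (v - y)); lra. lra.
  apply Rlt_le_trans with ((K+1) * (2 * (eps / (2 * (K + 1))))).
  apply Rmult_lt_compat_l; lra. right. field. lra.
Qed.

Lemma lipschitz_RInt_param_unif K (f : R -> R -> R) c d : (forall x, cont (f x)) ->
  (forall x x' y, Rabs (f x y - f x' y) <= K * Rabs (x - x')) ->
  lipschitz (K * Rabs (d - c)) (fun x => RInt (f x) c d).
Proof.
  intros Hc Hb x x'. rewrite <- RInt_minus_cont by auto.
  eapply Rle_trans. apply abs_RInt_le_const_cont with (B := K * Rabs (x - x')).
  apply cont_minus; auto. intros y. apply Hb. right; ring.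
Qed.

Lemma lipschitz_RInt_param K f c d : lipschitz2 K f ->
  lipschitz (K * Rabs (d - c)) (fun x => RInt (fun y => f x y) c d).
Proof.
  intros HL. apply lipschitz_RInt_param_unif.
  - intros x. apply (cont_lipschitz K), lipschitz2_r, HL.
  - intros x x' y. apply (lipschitz2_l K f y HL).
Qed.

(* As functions of the upper bound [b], both sides vanish at [a] and have derivative
   [int_c^d f b y dy]; for the right-hand side this is differentiation under the integral sign. *)
Lemma RInt_swap_lipschitz2 K f a b c d : lipschitz2 K f ->
  RInt (fun x => RInt (fun y => f x y) c d) a b = RInt (fun y => RInt (fun x => f x y) a b) c d.
Proof.
  intros HL.
  set (g := fun x => RInt (fun y => f x y) c d).
  assert (Cg : cont g) by (apply (cont_lipschitz _ _ (lipschitz_RInt_param K f c d HL))).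
  set (F := fun z y => RInt (fun x => f x y) a z).
  assert (Cfx : forall y, cont (fun x => f x y))
    by (intros y; apply (cont_lipschitz K); apply lipschitz2_l; auto).
  assert (dF : forall z y, is_derive (fun u => F u y) z (f z y)).
  { intros z y. apply (is_derive_RInt (V:=R_CompleteNormedModule) (fun x => f x y) (fun u => F u y) a z).
    - apply filter_forall. intros b0. apply RInt_correct. apply ex_RInt_cont. apply Cfx.
    - apply Cfx. }
  assert (CF : forall z, cont (fun y => F z y)).
  { intros z. apply (cont_lipschitz (K * Rabs (z - a))). unfold F.
    apply (lipschitz_RInt_param K (fun y x => f x y) a z). apply lipschitz2_swap. auto. }
  set (Phi := fun z => RInt g a z).
  set (Psi := fun z => RInt (fun y => F z y) c d).
  assert (dPhi : forall z, is_derive Phi z (g z)).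
  { intros z. apply (is_derive_RInt (V:=R_CompleteNormedModule) g Phi a z).
    - apply filter_forall. intros b0. apply RInt_correct. apply ex_RInt_cont. apply Cg.
    - apply Cg. }
  assert (dPsi : forall z, is_derive Psi z (g z)).
  { intros z. unfold Psi.
    replace (g z) with (RInt (fun t => Derive (fun u => F u t) z) c d).
    apply (is_derive_RInt_param F c d z).
    - apply filter_forall. intros x0 t _. eexists. apply dF.
    - intros t _. eapply continuity_2d_pt_ext. 2: apply (lipschitz2_continuity_2d K f z t HL).
      intros u v. symmetry. apply is_derive_unique. apply dF.
    - apply filter_forall. intros y. apply ex_RInt_cont. apply CF.
    - unfold g. apply RInt_ext_R. intros t _. apply is_derive_unique. apply dF. }
  assert (Hd : forall z, is_derive (fun z => Phi z - Psi z) z 0).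
  { intros z. replace 0 with (minus (g z) (g z)) by (unfold minus, plus, opp; simpl; ring).
    apply (is_derive_minus (K:=R_AbsRing) (V:=R_NormedModule)); auto. }
  pose proof (eq_of_is_derive_0 _ a b Hd) as E. cbv beta in E.
  assert (Phi a = 0). { unfold Phi. rewrite RInt_point. reflexivity. }
  assert (Psi a = 0).
  { unfold Psi, F. rewrite (RInt_ext_R _ (fun _ => 0)). rewrite (RInt_const (V:=R_CompleteNormedModule)).
    unfold scal; simpl; unfold mult; simpl. ring. intros. rewrite RInt_point. reflexivity. }
  change (Phi b = Psi b). lra.
Qed.

Definition clamp (M z : R) := Rmax (- M) (Rmin M z).

Lemma clamp_lipschitz M z z' : Rabs (clamp M z - clamp M z') <= Rabs (z - z').
Proof.
  unfold clamp, Rmax, Rmin.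
  destruct (Rle_dec M z), (Rle_dec M z');
  repeat match goal with |- context [Rle_dec ?a ?b] => destruct (Rle_dec a b) end;
  unfold Rabs; repeat match goal with |- context [Rcase_abs ?a] => destruct (Rcase_abs a) end; lra.
Qed.

Lemma abs_clamp_le M z : 0 <= M -> Rabs (clamp M z) <= M.
Proof.
  intros HM. unfold clamp, Rmax, Rmin.
  repeat match goal with |- context [Rle_dec ?a ?b] => destruct (Rle_dec a b) end;
  unfold Rabs; repeat match goal with |- context [Rcase_abs ?a] => destruct (Rcase_abs a) end; lra.
Qed.

Lemma clamp_id M z : - M <= z <= M -> clamp M z = z.
Proof.
  intros Hz. unfold clamp, Rmax, Rmin.
  destruct (Rle_dec M z); destruct (Rle_dec (- M) M); destruct (Rle_dec (- M) z); lra.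
Qed.

Lemma lipschitz2_bound K H x y : lipschitz2 K H -> Rabs (H x y)
  <= Rabs (H 0 0) + K * (Rabs x + Rabs y).
Proof.
  intros HL. specialize (HL x y 0 0). rewrite !Rminus_0_r in HL.
  pose proof (Rabs_triang_inv (H x y) (H 0 0)). lra.
Qed.

(* On [[-M, M]^2] this agrees with the integrand of the iterated truncated Gaussian integrals;
   clamping makes it globally Lipschitz, as [RInt_swap_lipschitz2] requires. *)
Lemma lipschitz2_gauss_clamp K H M : lipschitz2 K H -> 0 <= M ->
  lipschitz2 (Rabs (H 0 0) + 2 * K * M + K)
    (fun x y => gauss_density x * gauss_density y * H (clamp M x) (clamp M y)).
Proof.
  intros HL HM x y x' y'. pose proof (lipschitz2_const_ge0 _ _ HL) as HK.
  set (B := Rabs (H 0 0) + 2 * K * M).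
  assert (HB : forall u v, Rabs (H (clamp M u) (clamp M v)) <= B).
  { intros u v. eapply Rle_trans. apply lipschitz2_bound; eauto.
    pose proof (abs_clamp_le M u HM). pose proof (abs_clamp_le M v HM). unfold B. nra. }
  set (dx := gauss_density x). set (dy := gauss_density y).
  set (dx' := gauss_density x'). set (dy' := gauss_density y').
  set (h := H (clamp M x) (clamp M y)). set (h' := H (clamp M x') (clamp M y')).
  replace (dx * dy * h - dx' * dy' * h') with
    ((dx - dx') * (dy * h) + dx' * ((dy - dy') * h) + dx' * dy' * (h - h')) by ring.
  assert (A1 : Rabs ((dx - dx') * (dy * h)) <= Rabs (x - x') * B).
  { rewrite !Rabs_mult. pose proof (gauss_density_lipschitz x x'). rewrite Rmult_1_l in H0.
    pose proof (gauss_density_le_1 y). pose proof (gauss_density_pos y).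
    pose proof (HB x y). fold h in H3. rewrite (Rabs_pos_eq dy) by (unfold dy; lra).
    assert (dy * Rabs h <= B).
    { apply Rle_trans with (1 * Rabs h). apply Rmult_le_compat_r. apply Rabs_pos. unfold dy; lra. lra. }
    apply Rmult_le_compat; try apply Rabs_pos; auto. apply Rmult_le_pos. unfold dy; lra.
    apply Rabs_pos. }
  assert (A2 : Rabs (dx' * ((dy - dy') * h)) <= Rabs (y - y') * B).
  { rewrite !Rabs_mult. pose proof (gauss_density_lipschitz y y'). rewrite Rmult_1_l in H0.
    pose proof (gauss_density_le_1 x'). pose proof (gauss_density_pos x').
    pose proof (HB x y). fold h in H3. rewrite (Rabs_pos_eq dx') by (unfold dx'; lra).
    apply Rle_trans with (1 * (Rabs (y - y') * B)).
    apply Rmult_le_compat; [unfold dx'; lra | apply Rmult_le_pos; apply Rabs_pos | unfold dx'; lra | ].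
    apply Rmult_le_compat; try apply Rabs_pos; auto. lra. }
  assert (A3 : Rabs (dx' * dy' * (h - h')) <= K * (Rabs (x - x') + Rabs (y - y'))).
  { rewrite !Rabs_mult. pose proof (gauss_density_le_1 x'). pose proof (gauss_density_pos x').
    pose proof (gauss_density_le_1 y'). pose proof (gauss_density_pos y').
    rewrite (Rabs_pos_eq dx') by (unfold dx'; lra). rewrite (Rabs_pos_eq dy') by (unfold dy'; lra).
    assert (Rabs (h - h') <= K * (Rabs (x - x') + Rabs (y - y'))).
    { eapply Rle_trans. apply HL. apply Rmult_le_compat_l; auto.
      pose proof (clamp_lipschitz M x x'). pose proof (clamp_lipschitz M y y'). lra. }
    apply Rle_trans with (1 * 1 * (K * (Rabs (x - x') + Rabs (y - y')))).
    apply Rmult_le_compat; try apply Rabs_pos. apply Rmult_le_pos; unfold dx', dy'; lra.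
    apply Rmult_le_compat; unfold dx', dy'; lra. auto. lra. }
  eapply Rle_trans. apply Rabs_triang. eapply Rle_trans. apply Rplus_le_compat_r. apply Rabs_triang.
  unfold B in *. nra.
Qed.

Lemma lipschitz_gauss_mean_param K H : lipschitz2 K H ->
  lipschitz K (fun x => gauss_mean (fun y => H x y)).
Proof.
  intros HL x x'. pose proof (lipschitz2_const_ge0 _ _ HL) as HK.
  assert (forall u v, gauss_mean (fun y => H u y) <= gauss_mean (fun y => H v y) + K * Rabs (u - v)).
  { intros u v. rewrite <- (gauss_mean_plus_const K) by (apply lipschitz2_r; auto).
    apply (gauss_mean_le K K). apply lipschitz2_r; auto.
    apply lipschitz_plus_const, lipschitz2_r; auto.
    intros y. pose proof (HL u y v y). replace (y - y) with 0 in H0 by ring.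
    rewrite Rabs_R0, Rplus_0_r in H0.
    pose proof (Rle_abs (H u y - H v y)). lra. }
  pose proof (H0 x x'). pose proof (H0 x' x). rewrite Rabs_minus_sym in H2.
  apply Rabs_le. lra.
Qed.

Lemma lipschitz_gauss_RInt_param K H M : lipschitz2 K H ->
  lipschitz (K * Rabs (M - - M)) (fun x => gauss_RInt (fun y => H x y) (- M) M).
Proof.
  intros HL. pose proof (lipschitz2_const_ge0 _ _ HL). unfold gauss_RInt.
  apply (lipschitz_RInt_param_unif K (fun x y => gauss_density y * H x y)).
  - intros x. apply cont_gauss_density_mult. apply (cont_lipschitz K). apply lipschitz2_r; auto.
  - intros x x' y. rewrite <- Rmult_minus_distr_l. rewrite Rabs_mult.
    rewrite Rabs_pos_eq by (left; apply gauss_density_pos). pose proof (gauss_density_le_1 y).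
    pose proof (gauss_density_pos y).
    pose proof (lipschitz2_l K H y HL x x').
    apply Rle_trans with (1 * Rabs (H x y - H x' y)). apply Rmult_le_compat_r. apply Rabs_pos. lra.
    lra.
Qed.

Lemma gauss_mean_param_truncation K H M x : lipschitz2 K H -> 1 <= M -> Rabs x <= M ->
  Rabs (gauss_mean (fun y => H x y) - gauss_RInt (fun y => H x y) (- M) M)
  <= 2 * ((Rabs (H 0 0) + K * M + K) * gauss_decay M).
Proof.
  intros HL HM Hx. pose proof (lipschitz2_const_ge0 _ _ HL).
  eapply Rle_trans. apply (gauss_mean_truncation K (fun y => H x y) M (lipschitz2_r K H x HL) HM).
  pose proof (lipschitz2_bound K H x 0 HL) as Hb. rewrite Rabs_R0 in Hb.
  assert (Rabs (H x 0) + K <= Rabs (H 0 0) + K * M + K) by nra.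
  pose proof (gauss_decay_pos M). simpl. nra.
Qed.

Lemma iter_gauss_mean_truncation K H M : lipschitz2 K H -> 1 <= M ->
  Rabs (gauss_mean (fun x => gauss_mean (fun y => H x y))
        - gauss_RInt (fun x => gauss_RInt (fun y => H x y) (- M) M) (- M) M)
  <= (2 * (Rabs (gauss_mean (fun y => H 0 y)) + K) + 4 * (Rabs (H 0 0) + 2 * K))
     * (1 + M) ^ 2 * gauss_decay M.
Proof.
  intros HL HM. pose proof (lipschitz2_const_ge0 _ _ HL) as HK.
  set (outer := fun x => gauss_mean (fun y => H x y)).
  set (inner := fun x => gauss_RInt (fun y => H x y) (- M) M).
  assert (L1 : lipschitz K outer) by (apply lipschitz_gauss_mean_param; auto).
  assert (L2 : lipschitz (K * Rabs (M - - M)) inner) by (apply lipschitz_gauss_RInt_param; auto).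
  pose proof (gauss_mean_truncation K outer M L1 HM) as E1.
  assert (E2 : Rabs (gauss_RInt outer (- M) M - gauss_RInt inner (- M) M) <=
               (M - - M) * (2 * ((Rabs (H 0 0) + K * M + K) * gauss_decay M))).
  { replace (gauss_RInt outer (- M) M - gauss_RInt inner (- M) M)
      with (1 * gauss_RInt outer (- M) M + (-1) * gauss_RInt inner (- M) M) by ring.
    rewrite <- (gauss_RInt_lin _ _ _ _ 1 (-1) (- M) M L1 L2). unfold gauss_RInt.
    apply abs_RInt_le_const. lra. apply ex_RInt_cont. apply cont_gauss_density_mult.
    apply (cont_lipschitz _ _ (lipschitz_lin _ _ _ _ 1 (-1) L1 L2)).
    intros x Hx. rewrite Rabs_mult, Rabs_pos_eq by (left; apply gauss_density_pos).
    replace (1 * outer x + -1 * inner x) with (outer x - inner x) by ring.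
    pose proof (gauss_density_le_1 x). pose proof (Rabs_pos (outer x - inner x)).
    apply Rle_trans with (1 * Rabs (outer x - inner x)); [nra|]. rewrite Rmult_1_l.
    exact (gauss_mean_param_truncation K H M x HL HM ltac:(apply Rabs_le; lra)). }
  replace (gauss_mean outer - gauss_RInt inner (- M) M) with
    ((gauss_mean outer - gauss_RInt outer (- M) M) + (gauss_RInt outer (- M) M - gauss_RInt inner (- M) M))
    by ring.
  eapply Rle_trans. apply Rabs_triang.
  pose proof (gauss_decay_pos M). pose proof (Rabs_pos (outer 0)). pose proof (Rabs_pos (H 0 0)).
  assert (T1 : 2 * ((Rabs (outer 0) + K) * gauss_decay M)
               <= 2 * (Rabs (outer 0) + K) * (1 + M) ^ 2 * gauss_decay M).
  { assert (1 <= (1 + M) ^ 2) by nra.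
    rewrite <- Rmult_assoc. apply Rmult_le_compat_r. lra.
    rewrite <- (Rmult_1_r (2 * (Rabs (outer 0) + K))) at 1. apply Rmult_le_compat_l; lra. }
  assert (T2 : (M - - M) * (2 * ((Rabs (H 0 0) + K * M + K) * gauss_decay M))
               <= 4 * (Rabs (H 0 0) + 2 * K) * (1 + M) ^ 2 * gauss_decay M).
  { replace ((M - - M) * (2 * ((Rabs (H 0 0) + K * M + K) * gauss_decay M)))
      with (4 * (M * (Rabs (H 0 0) + K * M + K)) * gauss_decay M) by ring.
    apply Rmult_le_compat_r. lra. nra. }
  unfold outer in *. lra.
Qed.

Lemma iter_gauss_RInt_swap K H M : lipschitz2 K H -> 1 <= M ->
  gauss_RInt (fun x => gauss_RInt (fun y => H x y) (- M) M) (- M) M =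
  gauss_RInt (fun y => gauss_RInt (fun x => H x y) (- M) M) (- M) M.
Proof.
  intros HL HM.
  set (G := fun x y => gauss_density x * gauss_density y * H (clamp M x) (clamp M y)).
  assert (LG : lipschitz2 (Rabs (H 0 0) + 2 * K * M + K) G) by (apply lipschitz2_gauss_clamp; auto; lra).
  assert (Hmm : Rmin (- M) M = - M /\ Rmax (- M) M = M).
  { split. apply Rmin_left; lra. apply Rmax_right; lra. }
  destruct Hmm as [Hmin Hmax].
  transitivity (RInt (fun x => RInt (fun y => G x y) (- M) M) (- M) M).
  - unfold gauss_RInt. apply RInt_ext_R. intros x Hx. rewrite Hmin, Hmax in Hx.
    rewrite <- RInt_scal_cont.
    2:{ apply cont_gauss_density_mult. apply (cont_lipschitz K). apply lipschitz2_r; auto. }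
    apply RInt_ext_R. intros y Hy. rewrite Hmin, Hmax in Hy. unfold G.
    rewrite !clamp_id by lra. ring.
  - rewrite (RInt_swap_lipschitz2 _ G (- M) M (- M) M LG).
    unfold gauss_RInt. apply RInt_ext_R. intros y Hy. rewrite Hmin, Hmax in Hy.
    rewrite <- RInt_scal_cont.
    2:{ apply cont_gauss_density_mult. apply (cont_lipschitz K). apply lipschitz2_l; auto. }
    apply RInt_ext_R. intros x Hx. rewrite Hmin, Hmax in Hx. unfold G.
    rewrite !clamp_id by lra. ring.
Qed.

Lemma gauss_mean_swap K H : lipschitz2 K H ->
  gauss_mean (fun x => gauss_mean (fun y => H x y)) = gauss_mean (fun y => gauss_mean (fun x => H x y)).
Proof.
  intros HL.
  assert (HL' : lipschitz2 K (fun y x => H x y)) by (apply lipschitz2_swap; auto).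
  set (D1 := 2 * (Rabs (gauss_mean (fun y => H 0 y)) + K) + 4 * (Rabs (H 0 0) + 2 * K)).
  set (D2 := 2 * (Rabs (gauss_mean (fun x => H x 0)) + K) + 4 * (Rabs (H 0 0) + 2 * K)).
  assert (gauss_mean (fun x => gauss_mean (fun y => H x y))
          - gauss_mean (fun y => gauss_mean (fun x => H x y)) = 0); [|lra].
  apply (eq0_of_gauss_decay_bound _ (D1 + D2)). intros M HM.
  pose proof (iter_gauss_mean_truncation K H M HL HM).
  pose proof (iter_gauss_mean_truncation K _ M HL' HM). simpl in H1.
  rewrite (iter_gauss_RInt_swap K H M HL HM) in H0.
  fold D1 in H0. fold D2 in H1.
  match type of H0 with Rabs (?a - ?j) <= _ => match type of H1 with Rabs (?b - _) <= _ =>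
    replace (a - b) with ((a - j) - (b - j)) by ring end end.
  eapply Rle_trans. apply Rabs_triang. rewrite Rabs_Ropp. lra.
Qed.

(** * Gaussian means in several variables *)

Definition wtail (w : nat -> R) : nat -> R := fun n => w (S n).

Fixpoint l1_dist (d : nat) (w w' : nat -> R) : R :=
  match d with
  | O => 0
  | S d' => Rabs (w O - w' O) + l1_dist d' (wtail w) (wtail w')
  end.

Definition lipschitz_n (d : nat) (K : R) (g : (nat -> R) -> R) :=
  0 <= K /\ forall w w', Rabs (g w - g w') <= K * l1_dist d w w'.

Fixpoint gauss_mean_n (d : nat) (g : (nat -> R) -> R) : R :=
  match d with
  | O => g (fun _ => 0)
  | S d' => gauss_mean (fun y => gauss_mean_n d' (fun w => g (vcons y w)))
  end.

Lemma l1_dist_ge0 d w w' : 0 <= l1_dist d w w'.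
Proof.
  revert w w'; induction d; intros; simpl. lra.
  pose proof (Rabs_pos (w O - w' O)). pose proof (IHd (wtail w) (wtail w')). lra.
Qed.

Lemma l1_dist_refl d w : l1_dist d w w = 0.
Proof.
  revert w; induction d; intros; simpl. auto. rewrite IHd. unfold Rminus.
  rewrite Rplus_opp_r, Rabs_R0. ring.
Qed.

Lemma l1_dist_ge_coord d c w w' : (c < d)%nat -> Rabs (w c - w' c) <= l1_dist d w w'.
Proof.
  revert c w w'. induction d; intros c w w' H. lia. simpl.
  destruct c. pose proof (l1_dist_ge0 d (wtail w) (wtail w')). lra.
  pose proof (IHd c (wtail w) (wtail w') ltac:(lia)). pose proof (Rabs_pos (w 0%nat - w' 0%nat)).
  unfold wtail in *. lra.
Qed.

Lemma lipschitz_n_ext d K g1 g2 : (forall w, g1 w = g2 w) -> lipschitz_n d K g1 ->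
  lipschitz_n d K g2.
Proof. intros E. apply functional_extensionality in E. subst. auto. Qed.

Lemma lipschitz_n_vcons d K g y : lipschitz_n (S d) K g -> lipschitz_n d K (fun w => g (vcons y w)).
Proof.
  intros [HK HL]. split; auto. intros w w'. eapply Rle_trans. apply HL. simpl.
  unfold Rminus at 1. rewrite Rplus_opp_r, Rabs_R0, Rplus_0_l. right. reflexivity.
Qed.

Lemma lipschitz_n_lin d K1 K2 g1 g2 a b : lipschitz_n d K1 g1 -> lipschitz_n d K2 g2 ->
  lipschitz_n d (Rabs a * K1 + Rabs b * K2) (fun w => a * g1 w + b * g2 w).
Proof.
  intros [HK1 H1] [HK2 H2]. split.
  pose proof (Rabs_pos a). pose proof (Rabs_pos b). nra.
  intros w w'.
  replace (a * g1 w + b * g2 w - (a * g1 w' + b * g2 w'))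
    with (a * (g1 w - g1 w') + b * (g2 w - g2 w')) by ring.
  eapply Rle_trans. apply Rabs_triang. rewrite !Rabs_mult.
  pose proof (H1 w w'). pose proof (H2 w w'). pose proof (Rabs_pos a). pose proof (Rabs_pos b).
  rewrite Rmult_plus_distr_r. apply Rplus_le_compat.
  rewrite Rmult_assoc. apply Rmult_le_compat_l; auto.
  rewrite Rmult_assoc. apply Rmult_le_compat_l; auto.
Qed.

Lemma lipschitz_n_const d c : lipschitz_n d 0 (fun _ => c).
Proof. split. lra. intros. unfold Rminus. rewrite Rplus_opp_r, Rabs_R0. lra. Qed.

Lemma gauss_mean_n_const d c : gauss_mean_n d (fun _ => c) = c.
Proof.
  induction d; simpl; auto. rewrite (gauss_mean_ext _ (fun _ => c)). apply gauss_mean_const.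
  intros; apply IHd.
Qed.

(* Monotonicity and linearity are proved together by induction on the dimension: each needs,
   at the lower dimension, that the partial mean is Lipschitz in the first coordinate, and that
   in turn follows from both. *)
Definition gauss_mean_n_monotone d := forall K1 K2 g1 g2,
  lipschitz_n d K1 g1 -> lipschitz_n d K2 g2 ->
  (forall w, g1 w <= g2 w) -> gauss_mean_n d g1 <= gauss_mean_n d g2.

Definition gauss_mean_n_linear d := forall K1 K2 g1 g2 a b,
  lipschitz_n d K1 g1 -> lipschitz_n d K2 g2 ->
  gauss_mean_n d (fun w => a * g1 w + b * g2 w) = a * gauss_mean_n d g1 + b * gauss_mean_n d g2.

Lemma gauss_mean_n_plus_const_of_linear d : gauss_mean_n_linear d ->
  forall K g c, lipschitz_n d K g -> gauss_mean_n d (fun w => g w + c) = gauss_mean_n d g + c.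
Proof.
  intros HLn K g c HL. pose proof (HLn K 0 g (fun _ => 1) 1 c HL (lipschitz_n_const d 1)).
  rewrite gauss_mean_n_const in H. replace (fun w => g w + c) with (fun w => 1 * g w + c * 1).
  rewrite H. ring. apply functional_extensionality. intros; ring.
Qed.

Lemma lipschitz_gauss_mean_n_param_of d : gauss_mean_n_monotone d -> gauss_mean_n_linear d ->
  forall K g, lipschitz_n (S d) K g ->
  lipschitz K (fun y => gauss_mean_n d (fun w => g (vcons y w))).
Proof.
  intros HM HLn K g HL.
  assert (A : forall u v, gauss_mean_n d (fun w => g (vcons u w))
                          <= gauss_mean_n d (fun w => g (vcons v w)) + K * Rabs (u - v)).
  { intros u v. rewrite <- (gauss_mean_n_plus_const_of_linear d HLn K) by (apply lipschitz_n_vcons; auto).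
    apply (HM K K). apply lipschitz_n_vcons; auto.
    { destruct (lipschitz_n_vcons d K g v HL) as [HK H]. split; auto. intros w w'.
      replace (g (vcons v w) + K * Rabs (u - v) - (g (vcons v w') + K * Rabs (u - v)))
        with (g (vcons v w) - g (vcons v w')) by ring.
      apply H. }
    intros w. destruct HL as [HK HL]. pose proof (HL (vcons u w) (vcons v w)). simpl in H.
    rewrite l1_dist_refl, Rplus_0_r in H. pose proof (Rle_abs (g (vcons u w) - g (vcons v w))).
    lra. }
  intros x x'. pose proof (A x x'). pose proof (A x' x). rewrite Rabs_minus_sym in H0.
  apply Rabs_le. lra.
Qed.

Lemma gauss_mean_n_le_lin d : gauss_mean_n_monotone d /\ gauss_mean_n_linear d.
Proof.
  induction d.
  - split.
    + intros K1 K2 g1 g2 _ _ H. simpl. apply H.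
    + intros K1 K2 g1 g2 a b _ _. simpl. auto.
  - destruct IHd as [HM HLn]. split.
    + intros K1 K2 g1 g2 H1 H2 Hle. simpl.
      apply (gauss_mean_le K1 K2). apply (lipschitz_gauss_mean_n_param_of d HM HLn); auto.
      apply (lipschitz_gauss_mean_n_param_of d HM HLn); auto.
      intros y. apply (HM K1 K2). apply lipschitz_n_vcons; auto. apply lipschitz_n_vcons; auto.
      intros; apply Hle.
    + intros K1 K2 g1 g2 a b H1 H2. simpl.
      rewrite (gauss_mean_ext _ (fun y => a * gauss_mean_n d (fun w => g1 (vcons y w))
                                          + b * gauss_mean_n d (fun w => g2 (vcons y w)))).
      apply (gauss_mean_lin K1 K2). apply (lipschitz_gauss_mean_n_param_of d HM HLn); auto.
      apply (lipschitz_gauss_mean_n_param_of d HM HLn); auto.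
      intros y. apply (HLn K1 K2). apply lipschitz_n_vcons; auto. apply lipschitz_n_vcons; auto.
Qed.

Lemma gauss_mean_n_le d K1 K2 g1 g2 : lipschitz_n d K1 g1 -> lipschitz_n d K2 g2 ->
  (forall w, g1 w <= g2 w) -> gauss_mean_n d g1 <= gauss_mean_n d g2.
Proof. apply (proj1 (gauss_mean_n_le_lin d)). Qed.

Lemma gauss_mean_n_lin d K1 K2 g1 g2 a b : lipschitz_n d K1 g1 -> lipschitz_n d K2 g2 ->
  gauss_mean_n d (fun w => a * g1 w + b * g2 w) = a * gauss_mean_n d g1 + b * gauss_mean_n d g2.
Proof. apply (proj2 (gauss_mean_n_le_lin d)). Qed.

Lemma lipschitz_gauss_mean_n_param d K g : lipschitz_n (S d) K g ->
  lipschitz K (fun y => gauss_mean_n d (fun w => g (vcons y w))).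
Proof.
  apply lipschitz_gauss_mean_n_param_of; [apply gauss_mean_n_le_lin | apply gauss_mean_n_le_lin].
Qed.

Lemma gauss_mean_n_ext d g1 g2 : (forall w, g1 w = g2 w) -> gauss_mean_n d g1 = gauss_mean_n d g2.
Proof. intros H. apply functional_extensionality in H. subst. auto. Qed.

Lemma gauss_mean_n_dist d K1 K2 g1 g2 c : lipschitz_n d K1 g1 -> lipschitz_n d K2 g2 ->
  (forall w, Rabs (g1 w - g2 w) <= c) -> Rabs (gauss_mean_n d g1 - gauss_mean_n d g2) <= c.
Proof.
  intros H1 H2 Hc.
  assert (A : forall K1 K2 g1 g2, lipschitz_n d K1 g1 -> lipschitz_n d K2 g2 ->
                                  (forall w, Rabs (g1 w - g2 w) <= c) ->
    gauss_mean_n d g1 <= gauss_mean_n d g2 + c).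
  { clear. intros K1 K2 g1 g2 H1 H2 Hc.
    rewrite <- (gauss_mean_n_plus_const_of_linear d (proj2 (gauss_mean_n_le_lin d)) K2) by auto.
    apply (gauss_mean_n_le d K1 K2); auto.
    { destruct H2 as [HK H]. split; auto. intros w w'.
      replace (g2 w + c - (g2 w' + c)) with (g2 w - g2 w') by ring. apply H. }
    intros w. pose proof (Hc w). pose proof (Rle_abs (g1 w - g2 w)). lra. }
  pose proof (A _ _ _ _ H1 H2 Hc).
  pose proof (A _ _ _ _ H2 H1 ltac:(intros w; rewrite Rabs_minus_sym; auto)).
  apply Rabs_le. lra.
Qed.

Lemma gauss_exp_gauss_mean_n d K g : lipschitz_n d K g -> gauss_exp d g (gauss_mean_n d g).
Proof.
  revert K g. induction d; intros K g HL; simpl. auto.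
  exists (fun y => gauss_mean_n d (fun w => g (vcons y w))). split.
  - intros y. apply (IHd K). apply lipschitz_n_vcons; auto.
  - apply (gauss_mean_improper_int K). apply lipschitz_gauss_mean_n_param; auto.
Qed.

Lemma gauss_exp_unique d K g v : lipschitz_n d K g -> gauss_exp d g v -> v = gauss_mean_n d g.
Proof.
  revert K g v. induction d; intros K g v HL Hg; simpl in *. auto.
  destruct Hg as [h [Hh Himp]].
  assert (E : h = fun y => gauss_mean_n d (fun w => g (vcons y w))).
  { apply functional_extensionality. intros y. apply (IHd K). apply lipschitz_n_vcons; auto. auto. }
  subst h. apply (improper_int_gauss_mean K). apply lipschitz_gauss_mean_n_param; auto. auto.
Qed.

Definition wshift (k : nat) (w : nat -> R) : nat -> R := fun n => w (k + n)%nat.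

Lemma gauss_mean_n_wtail d g : gauss_mean_n (S d) (fun w => g (wtail w)) = gauss_mean_n d g.
Proof.
  simpl. change (gauss_mean (fun _ => gauss_mean_n d g) = gauss_mean_n d g). apply gauss_mean_const.
Qed.

Lemma gauss_mean_n_wshift k d g : gauss_mean_n (k + d) (fun w => g (wshift k w)) = gauss_mean_n d g.
Proof.
  induction k.
  - apply gauss_mean_n_ext. intros w. reflexivity.
  - change (gauss_mean_n (S (k + d)) (fun w => (fun w' => g (wshift k w')) (wtail w)) = gauss_mean_n d g).
    rewrite gauss_mean_n_wtail. exact IHk.
Qed.

Lemma gauss_mean_n_pad d k K g : lipschitz_n d K g -> gauss_mean_n (d + k) g = gauss_mean_n d g.
Proof.
  revert g K. induction d; intros g K HL.
  - simpl. rewrite (gauss_mean_n_ext k g (fun _ => g (fun _ => 0))). apply gauss_mean_n_const.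
    intros w. destruct HL as [HK H]. pose proof (H w (fun _ => 0)). simpl in H0.
    rewrite Rmult_0_r in H0. pose proof (Rabs_pos (g w - g (fun _ => 0))).
    assert (g w - g (fun _ => 0) = 0). { apply Rabs_eq_0. lra. } lra.
  - simpl. apply gauss_mean_ext. intros y. apply (IHd _ K). apply lipschitz_n_vcons; auto.
Qed.

Definition transp (c c' n : nat) : nat := if Nat.eqb n c then c' else if Nat.eqb n c' then c else n.
Definition wtransp (c c' : nat) (w : nat -> R) : nat -> R := fun n => w (transp c c' n).

Lemma wtransp01_vcons x y w : wtransp 0 1 (vcons x (vcons y w)) = vcons y (vcons x w).
Proof. apply functional_extensionality. intros [|[|n]]; reflexivity. Qed.

Lemma wtransp_succ_vcons i y w : wtransp (S i) (S (S i)) (vcons y w) = vcons y (wtransp i (S i) w).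
Proof.
  apply functional_extensionality. intros [|n]. reflexivity.
  unfold wtransp, transp. simpl. destruct (Nat.eqb n i); simpl; auto.
  destruct (Nat.eqb n (S i)); simpl; auto.
Qed.

Lemma wtail_wtransp_succ i w : wtail (wtransp (S i) (S (S i)) w) = wtransp i (S i) (wtail w).
Proof.
  apply functional_extensionality. intros n. unfold wtail, wtransp, transp. simpl.
  destruct (Nat.eqb n i); simpl; auto. destruct (Nat.eqb n (S i)); simpl; auto.
Qed.

Lemma l1_dist_wtransp_adj d i w w' : (S i < d)%nat ->
  l1_dist d (wtransp i (S i) w) (wtransp i (S i) w') = l1_dist d w w'.
Proof.
  revert d w w'. induction i; intros d w w' Hd.
  - destruct d as [|[|d]]; try lia. simpl.
    assert (wtail (wtail (wtransp 0 1 w)) = wtail (wtail w))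
      by (apply functional_extensionality; intros; reflexivity).
    assert (wtail (wtail (wtransp 0 1 w')) = wtail (wtail w'))
      by (apply functional_extensionality; intros; reflexivity).
    rewrite H, H0. unfold wtail, wtransp, transp. simpl. ring.
  - destruct d as [|d]; try lia. simpl. rewrite !wtail_wtransp_succ. rewrite IHi by lia.
    reflexivity.
Qed.

Lemma lipschitz_n_wtransp_adj d K g i : lipschitz_n d K g -> (S i < d)%nat ->
  lipschitz_n d K (fun w => g (wtransp i (S i) w)).
Proof.
  intros [HK H] Hi. split; auto. intros w w'. eapply Rle_trans. apply H.
  rewrite l1_dist_wtransp_adj; auto. lra.
Qed.

Lemma lipschitz2_gauss_mean_n d K g : lipschitz_n (S (S d)) K g ->
  lipschitz2 K (fun x y => gauss_mean_n d (fun w => g (vcons x (vcons y w)))).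
Proof.
  intros HL x y x' y'. destruct HL as [HK H].
  apply (gauss_mean_n_dist d K K).
  apply (lipschitz_n_vcons d K (fun w => g (vcons x w)) y). apply lipschitz_n_vcons. split; auto.
  apply (lipschitz_n_vcons d K (fun w => g (vcons x' w)) y'). apply lipschitz_n_vcons. split; auto.
  intros w. eapply Rle_trans. apply H. simpl. rewrite l1_dist_refl. right. unfold wtail. simpl.
  f_equal. ring.
Qed.

Lemma gauss_mean_n_wtransp_adj i d K g : lipschitz_n d K g -> (S i < d)%nat ->
  gauss_mean_n d (fun w => g (wtransp i (S i) w)) = gauss_mean_n d g.
Proof.
  revert d K g. induction i; intros d K g HL Hd.
  - destruct d as [|[|d]]; try lia. simpl.
    rewrite (gauss_mean_ext _ (fun x => gauss_mean (fun y => gauss_mean_n d (fun w => g (vcons y (vcons x w)))))).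
    2:{ intros x. apply gauss_mean_ext. intros y. apply gauss_mean_n_ext. intros w.
        rewrite wtransp01_vcons. auto. }
    symmetry.
    apply (gauss_mean_swap K (fun x y => gauss_mean_n d (fun w => g (vcons x (vcons y w))))).
    apply lipschitz2_gauss_mean_n; auto.
  - destruct d as [|d]; try lia. simpl. apply gauss_mean_ext. intros y.
    rewrite (gauss_mean_n_ext d _ (fun w => (fun w' => g (vcons y w')) (wtransp i (S i) w))).
    2:{ intros w. rewrite wtransp_succ_vcons. auto. }
    apply (IHi d K (fun w0 => g (vcons y w0))). apply lipschitz_n_vcons; auto. lia.
Qed.

Lemma transp_decomp c c' n : (S c < c')%nat ->
  transp c c' n = transp c (S c) (transp (S c) c' (transp c (S c) n)).
Proof.
  intros H. unfold transp.
  repeat match goal with |- context [Nat.eqb ?a ?b] =>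
    match a with context [Nat.eqb _ _] => fail 1 | _ => destruct (Nat.eqb_spec a b) end end;
  lia.
Qed.

Lemma gauss_mean_n_wtransp_aux gap : forall c d K g, (c + S gap < d)%nat ->
  lipschitz_n d K g -> lipschitz_n d K (fun w => g (wtransp c (c + S gap) w)) /\
  gauss_mean_n d (fun w => g (wtransp c (c + S gap) w)) = gauss_mean_n d g.
Proof.
  induction gap; intros c d K g Hd HL.
  - replace (c + 1)%nat with (S c) by lia.
    split. apply lipschitz_n_wtransp_adj; auto; lia.
    apply (gauss_mean_n_wtransp_adj c d K); auto; lia.
  - set (c' := (c + S (S gap))%nat).
    set (g1 := fun w => g (wtransp c (S c) w)).
    assert (L1 : lipschitz_n d K g1) by (apply lipschitz_n_wtransp_adj; auto; unfold c' in *; lia).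
    destruct (IHgap (S c) d K g1 ltac:(unfold c' in *; lia) L1) as [L2 E2].
    replace (S c + S gap)%nat with c' in L2, E2 by (unfold c'; lia).
    set (g2 := fun w => g1 (wtransp (S c) c' w)) in *.
    assert (E : (fun w => g (wtransp c c' w)) = (fun w => g2 (wtransp c (S c) w))).
    { apply functional_extensionality. intros w. unfold g2, g1, wtransp. f_equal.
      apply functional_extensionality. intros n. rewrite transp_decomp; auto. unfold c'; lia. }
    rewrite E. split. apply lipschitz_n_wtransp_adj; auto; unfold c' in *; lia.
    rewrite (gauss_mean_n_wtransp_adj c d K g2); auto; try (unfold c' in *; lia). rewrite E2.
    apply (gauss_mean_n_wtransp_adj c d K); auto. unfold c' in *; lia.
Qed.

Lemma gauss_mean_n_wtransp c c' d K g : (c < c')%nat -> (c' < d)%nat -> lipschitz_n d K g ->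
  lipschitz_n d K (fun w => g (wtransp c c' w)) /\
  gauss_mean_n d (fun w => g (wtransp c c' w)) = gauss_mean_n d g.
Proof.
  intros H1 H2 HL. replace c' with (c + S (c' - c - 1))%nat by lia.
  apply gauss_mean_n_wtransp_aux; auto. lia.
Qed.

Definition lsum {A : Type} (g : A -> R) (l : list A) : R := fold_right Rplus 0 (map g l).

Section ListSums.

Context {A : Type}.
Implicit Types (g h : A -> R) (l : list A).

Lemma lsum_cons g s l : lsum g (s :: l) = g s + lsum g l.
Proof. reflexivity. Qed.

Lemma lsum_le g h l : (forall s, In s l -> g s <= h s) -> lsum g l <= lsum h l.
Proof.
  induction l; intros H; unfold lsum in *; simpl. lra.
  apply Rplus_le_compat. apply H; simpl; auto. apply IHl. intros; apply H; simpl; auto.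
Qed.

Lemma lsum_ge0 g l : (forall s, In s l -> 0 <= g s) -> 0 <= lsum g l.
Proof.
  induction l; intros H; rewrite ?lsum_cons; [unfold lsum; simpl; lra|].
  pose proof (H a (or_introl eq_refl)). pose proof (IHl (fun s Hs => H s (or_intror Hs))). lra.
Qed.

Lemma lsum_ge_elem g l s : (forall s, In s l -> 0 <= g s) -> In s l -> g s <= lsum g l.
Proof.
  induction l; intros H Hs; simpl in Hs. destruct Hs.
  rewrite lsum_cons. destruct Hs as [<-|Hs].
  - pose proof (lsum_ge0 g l ltac:(intros; apply H; simpl; auto)). lra.
  - pose proof (IHl ltac:(intros; apply H; simpl; auto) Hs). pose proof (H a ltac:(simpl; auto)).
    lra.
Qed.

Lemma lsum_gt0 g l : l <> [] -> (forall s, In s l -> 0 < g s) -> 0 < lsum g l.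
Proof.
  destruct l as [|a l]. congruence. intros _ H. rewrite lsum_cons.
  pose proof (H a ltac:(simpl; auto)).
  pose proof (lsum_ge0 g l ltac:(intros; left; apply H; simpl; auto)). lra.
Qed.

Lemma lsum_ext_in g h l : (forall s, In s l -> g s = h s) -> lsum g l = lsum h l.
Proof. intros H. unfold lsum. f_equal. apply map_ext_in. auto. Qed.

Lemma lsum_scal k g l : lsum (fun s => k * g s) l = k * lsum g l.
Proof. induction l; unfold lsum in *; simpl. ring. rewrite IHl. ring. Qed.

Lemma ln_lsum_exp_le (l : list A) (p y y' : A -> R) :
  (forall s, In s l -> 0 < p s) ->
  ln (lsum (fun s => p s * exp (y s)) l)
  <= ln (lsum (fun s => p s * exp (y' s)) l) + lsum (fun s => Rabs (y s - y' s)) l.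
Proof.
  intros Hp. set (d := lsum (fun s => Rabs (y s - y' s)) l).
  destruct l as [|a l0]; [unfold d, lsum; simpl; lra|].
  set (l := a :: l0) in *. assert (Hne : l <> []) by (unfold l; congruence).
  assert (P1 : 0 < lsum (fun s => p s * exp (y s)) l).
  { apply lsum_gt0; auto. intros. apply Rmult_lt_0_compat; auto. apply exp_pos. }
  assert (P2 : 0 < lsum (fun s => p s * exp (y' s)) l).
  { apply lsum_gt0; auto. intros. apply Rmult_lt_0_compat; auto. apply exp_pos. }
  assert (Hle : lsum (fun s => p s * exp (y s)) l <= exp d * lsum (fun s => p s * exp (y' s)) l).
  { rewrite <- lsum_scal. apply lsum_le. intros s Hs.
    assert (Rabs (y s - y' s) <= d).
    { apply (lsum_ge_elem (fun s => Rabs (y s - y' s))); auto. intros; apply Rabs_pos. }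
    pose proof (Rle_abs (y s - y' s)).
    replace (exp d * (p s * exp (y' s))) with (p s * exp (d + y' s)) by (rewrite exp_plus; ring).
    apply Rmult_le_compat_l. left; auto.
    destruct (Req_dec (y s) (d + y' s)) as [E|E]. rewrite E; lra. left; apply exp_increasing. lra. }
  apply ln_le in Hle; auto. rewrite ln_mult, ln_exp in Hle; auto. lra. apply exp_pos.
Qed.

End ListSums.

(* [T(u, u) T(u', u') <= T(u', u) T(u, u')]: the difference is [a0 a1 (e^(b u) - e^(b u'))^2]. *)
Lemma ln_exp_sum_supermod a0 a1 C b u u' : 0 < a0 -> 0 <= a1 -> 0 <= C ->
  let T := fun X Y => a0 * exp (b * X) + a1 * exp (b * Y) + C in
  ln (T u u) + ln (T u' u') <= ln (T u' u) + ln (T u u').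
Proof.
  intros H0 H1 H2 T. unfold T.
  set (E := exp (b * u)). set (E' := exp (b * u')).
  assert (0 < E) by apply exp_pos. assert (0 < E') by apply exp_pos.
  rewrite <- !ln_mult by nra.
  apply ln_le. apply Rmult_lt_0_compat; nra.
  assert (0 <= a0 * a1 * (E - E') ^ 2) by (apply Rmult_le_pos; [nra | apply pow2_ge_0]).
  nra.
Qed.

Fixpoint lin_form (beta : nat -> R) (f : nat -> nat -> nat) (w : nat -> R) (k : nat) (s : list nat)
  : R :=
  match s with
  | [] => 0
  | a :: r => beta a * w (f k a) + lin_form beta f w (S k) r
  end.

Fixpoint lin_form_coef (beta : nat -> R) (f : nat -> nat -> nat) (x : nat) (k : nat) (s : list nat)
  : R :=
  match s with
  | [] => 0
  | a :: r => (if Nat.eqb (f k a) x then beta a else 0) + lin_form_coef beta f x (S k) r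
  end.

Fixpoint sum_abs (beta : nat -> R) (s : list nat) : R :=
  match s with [] => 0 | a :: r => Rabs (beta a) + sum_abs beta r end.

Definition wzero2 (c c' : nat) (w : nat -> R) : nat -> R :=
  fun n => if Nat.eqb n c then 0 else if Nat.eqb n c' then 0 else w n.

Section LinForm.

Variables (beta : nat -> R) (f : nat -> nat -> nat).

Lemma sum_abs_ge0 s : 0 <= sum_abs beta s.
Proof. induction s; simpl. lra. pose proof (Rabs_pos (beta a)). lra. Qed.

Lemma lin_form_decomp w c c' k s : c <> c' ->
  lin_form beta f w k s = lin_form beta f (wzero2 c c' w) k s
                          + lin_form_coef beta f c k s * w c + lin_form_coef beta f c' k s * w c'.
Proof.
  intros Hc. revert k; induction s; intros k; simpl. ring.
  rewrite IHs. unfold wzero2.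
  destruct (Nat.eqb_spec (f k a) c) as [e|e]; destruct (Nat.eqb_spec (f k a) c') as [e'|e']; try lia.
  - rewrite e. ring.
  - rewrite e'. ring.
  - ring.
Qed.

Lemma lin_form_ext g w1 w2 k s :
  (forall i, (i < length s)%nat -> w1 (f (k + i)%nat (nth i s 0%nat)) = w2 (g (k + i)%nat (nth i s 0%nat))) ->
  lin_form beta f w1 k s = lin_form beta g w2 k s.
Proof.
  revert k; induction s; intros k H; simpl; auto.
  pose proof (H 0%nat ltac:(simpl; lia)) as H0. simpl in H0. rewrite Nat.add_0_r in H0. rewrite H0.
  f_equal. apply IHs. intros i Hi. pose proof (H (S i) ltac:(simpl; lia)) as H1. simpl in H1.
  replace (S k + i)%nat with (k + S i)%nat by lia. auto.
Qed.

Lemma lin_form_coef_0 x k s :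
  (forall i, (i < length s)%nat -> f (k + i)%nat (nth i s 0%nat) <> x) ->
  lin_form_coef beta f x k s = 0.
Proof.
  revert k; induction s; intros k H; simpl; auto.
  pose proof (H 0%nat ltac:(simpl; lia)) as H0. simpl in H0. rewrite Nat.add_0_r in H0.
  destruct (Nat.eqb_spec (f k a) x); try lia. rewrite IHs. ring.
  intros i Hi. pose proof (H (S i) ltac:(simpl; lia)) as H1. simpl in H1.
  replace (S k + i)%nat with (k + S i)%nat by lia. auto.
Qed.

Lemma lin_form_coef_single x k s i0 : (i0 < length s)%nat -> f (k + i0)%nat (nth i0 s 0%nat) = x ->
  (forall i, (i < length s)%nat -> i <> i0 -> f (k + i)%nat (nth i s 0%nat) <> x) ->
  lin_form_coef beta f x k s = beta (nth i0 s 0%nat).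
Proof.
  revert k i0; induction s; intros k i0 H1 H2 H3; simpl in *. lia.
  destruct i0 as [|i0].
  - rewrite Nat.add_0_r in H2. rewrite H2, Nat.eqb_refl, lin_form_coef_0. ring.
    intros i Hi. pose proof (H3 (S i) ltac:(lia) ltac:(lia)) as H. simpl in H.
    replace (S k + i)%nat with (k + S i)%nat by lia. auto.
  - pose proof (H3 0%nat ltac:(lia) ltac:(lia)) as H. rewrite Nat.add_0_r in H.
    destruct (Nat.eqb_spec (f k a) x); try lia.
    rewrite (IHs (S k) i0); try lia. ring.
    replace (S k + i0)%nat with (k + S i0)%nat by lia. auto.
    intros i Hi Hne. pose proof (H3 (S i) ltac:(lia) ltac:(lia)) as H0. simpl in H0.
    replace (S k + i)%nat with (k + S i)%nat by lia. auto.
Qed.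

Lemma lin_form_lipschitz w w' k s d :
  (forall i, (i < length s)%nat -> (f (k + i)%nat (nth i s 0%nat) < d)%nat) ->
  Rabs (lin_form beta f w k s - lin_form beta f w' k s) <= sum_abs beta s * l1_dist d w w'.
Proof.
  revert k; induction s; intros k H; simpl. rewrite Rminus_0_r, Rabs_R0. lra.
  pose proof (H 0%nat ltac:(simpl; lia)) as H0. simpl in H0. rewrite Nat.add_0_r in H0.
  assert (IH : Rabs (lin_form beta f w (S k) s - lin_form beta f w' (S k) s)
               <= sum_abs beta s * l1_dist d w w').
  { apply IHs. intros i Hi. pose proof (H (S i) ltac:(simpl; lia)) as H1. simpl in H1.
    replace (S k + i)%nat with (k + S i)%nat by lia. auto. }
  replace (beta a * w (f k a) + lin_form beta f w (S k) s - (beta a * w' (f k a) + lin_form beta f w' (S k) s))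
    with (beta a * (w (f k a) - w' (f k a)) + (lin_form beta f w (S k) s - lin_form beta f w' (S k) s))
    by ring.
  eapply Rle_trans. apply Rabs_triang. rewrite Rabs_mult.
  pose proof (l1_dist_ge_coord d _ w w' H0). pose proof (Rabs_pos (beta a)).
  assert (Rabs (beta a) * Rabs (w (f k a) - w' (f k a)) <= Rabs (beta a) * l1_dist d w w')
    by (apply Rmult_le_compat_l; auto).
  lra.
Qed.

End LinForm.

Lemma xsum_lin_form N beta w k s : xsum N beta w k s
  = lin_form beta (fun k a => (a + N * k)%nat) w k s.
Proof. revert k; induction s; intros k; simpl; auto. rewrite IHs. auto. Qed.

Lemma zsum_lin_form beta w base k s : zsum beta w base k s
  = lin_form beta (fun k a => (base + k)%nat) w k s.
Proof. revert k; induction s; intros k; simpl; auto. rewrite IHs. auto. Qed.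

Lemma in_words N t s : In s (words N t) -> length s = t /\ (forall a, In a s -> (a < N)%nat).
Proof.
  revert s. induction t; intros s H; simpl in H.
  - destruct H as [<-|[]]. simpl. split; auto. intros a [].
  - apply in_flat_map in H. destruct H as [i [Hi Hs]]. apply in_map_iff in Hs.
    destruct Hs as [r [<- Hr]]. apply in_seq in Hi. destruct (IHt r Hr) as [Hl Ha]. simpl.
    split. lia. intros a [<-|Ha']. lia. auto.
Qed.

Lemma in_St N pi P t s : In s (St N pi P t) -> In s (words N t) /\ 0 < Pword pi P s.
Proof.
  unfold St. intros H. apply filter_In in H. destruct H as [H1 H2]. split; auto.
  destruct (Rlt_dec 0 (Pword pi P s)); auto. discriminate.
Qed.

Lemma in_St_letters N pi P t s : In s (St N pi P t) ->
  length s = t /\ forall i, (i < t)%nat -> (nth i s 0%nat < N)%nat.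
Proof.
  intros H. destruct (in_St _ _ _ _ _ H) as [Hw _]. destruct (in_words _ _ _ Hw) as [Hl Ha].
  split; auto. intros i Hi. apply Ha. apply nth_In. lia.
Qed.

Lemma word_index_spec l s : In s l ->
  (word_index l s < length l)%nat /\ nth (word_index l s) l [] = s.
Proof.
  induction l; intros H; simpl in *. destruct H.
  destruct (list_eq_dec Nat.eq_dec a s). subst. split; auto. lia.
  destruct H. congruence. destruct (IHl H). split; auto. lia.
Qed.

Lemma word_index_inj l s s' : In s l -> In s' l -> word_index l s = word_index l s' -> s = s'.
Proof.
  intros H1 H2 E. destruct (word_index_spec l s H1) as [_ E1].
  destruct (word_index_spec l s' H2) as [_ E2]. rewrite <- E1, <- E2, E. auto.
Qed.

Lemma divmod_inj t j i j' i' : (i < t)%nat -> (i' < t)%nat ->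
  (j * t + i = j' * t + i')%nat -> j = j' /\ i = i'.
Proof.
  intros Hi Hi' E. destruct (lt_eq_lt_dec j j') as [[Hl|He]|Hl].
  - assert (j' * t >= S j * t)%nat by (apply Nat.mul_le_mono_r; lia). simpl in H. lia.
  - subst. lia.
  - assert (j * t >= S j' * t)%nat by (apply Nat.mul_le_mono_r; lia). simpl in H. lia.
Qed.

Lemma mul_succ_le_mul a b n : (a < n)%nat -> (b * S a <= b * n)%nat.
Proof. intros. apply Nat.mul_le_mono_l. lia. Qed.

Definition word_eqb (s s0 : list nat) : bool := if list_eq_dec Nat.eq_dec s s0 then true else false.

Lemma lsum_exp_decomp (l : list (list nat)) (q alpha : list nat -> R) (s0 : list nat) (b X Y : R) :
  (forall s, In s l -> s <> s0 -> alpha s = 0 \/ alpha s = b) ->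
  lsum (fun s => q s * exp (if word_eqb s s0 then b * X else alpha s * Y)) l =
  lsum (fun s => if word_eqb s s0 then q s else 0) l * exp (b * X) +
  lsum (fun s => if word_eqb s s0 then 0 else if Req_EM_T (alpha s) b then q s else 0) l * exp (b * Y) +
  lsum (fun s => if word_eqb s s0 then 0 else if Req_EM_T (alpha s) b then 0 else q s) l.
Proof.
  induction l as [|a l IH]; intros H. unfold lsum; simpl. ring.
  rewrite !lsum_cons, IH by (intros; apply H; simpl; auto).
  unfold word_eqb. destruct (list_eq_dec Nat.eq_dec a s0).
  - ring.
  - destruct (Req_EM_T (alpha a) b) as [E|E].
    + rewrite E. ring.
    + destruct (H a ltac:(simpl; auto) n) as [E0|E0]; [|congruence]. rewrite E0, Rmult_0_l, exp_0.
      ring.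
Qed.

Lemma ln_lsum_exp_supermod (l : list (list nat)) (q alpha : list nat -> R) (s0 : list nat) (b u u' : R) :
  (forall s, In s l -> 0 < q s) -> In s0 l ->
  (forall s, In s l -> s <> s0 -> alpha s = 0 \/ alpha s = b) ->
  let T := fun X Y => lsum (fun s => q s * exp (if word_eqb s s0 then b * X else alpha s * Y)) l in
  ln (T u u) + ln (T u' u') <= ln (T u' u) + ln (T u u').
Proof.
  intros Hq Hs0 Ha T. unfold T. rewrite !(lsum_exp_decomp l q alpha s0 b) by auto.
  apply ln_exp_sum_supermod.
  - apply Rlt_le_trans with ((fun s => if word_eqb s s0 then q s else 0) s0).
    + unfold word_eqb. destruct (list_eq_dec Nat.eq_dec s0 s0); [apply Hq; auto|congruence].
    + apply (lsum_ge_elem (fun s => if word_eqb s s0 then q s else 0) l s0); auto.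
      intros s Hs. destruct (word_eqb s s0). left; auto. lra.
  - apply lsum_ge0. intros s Hs. destruct (word_eqb s s0). lra.
    destruct (Req_EM_T (alpha s) b). left; auto. lra.
  - apply lsum_ge0. intros s Hs. destruct (word_eqb s s0). lra.
    destruct (Req_EM_T (alpha s) b). lra. left; auto.
Qed.

(** * Interpolating between the two Gaussian fields *)

Section Model.

Variables (N : nat) (P : nat -> nat -> R) (pi beta : nat -> R) (t : nat).
Hypothesis Ht : (1 <= t)%nat.

Local Notation St_t := (St N pi P t).
Local Notation phi_t := (phi N pi P beta t).

Lemma phi_lsum x :
  phi_t x = - / INR t * ln (lsum (fun s => Pword pi P s * exp (- betasq beta s / 2 + x s)) St_t).
Proof. reflexivity. Qed.

Lemma phi_ext_in x x' : (forall s, In s St_t -> x s = x' s) -> phi_t x = phi_t x'.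
Proof.
  intros H. rewrite !phi_lsum. do 2 f_equal. apply lsum_ext_in. intros s Hs. rewrite H; auto.
Qed.

Lemma inv_INR_t_pos : 0 < / INR t.
Proof. apply Rinv_0_lt_compat, lt_0_INR. lia. Qed.

Lemma phi_lipschitz x x' :
  Rabs (phi_t x - phi_t x') <= / INR t * lsum (fun s => Rabs (x s - x' s)) St_t.
Proof.
  rewrite !phi_lsum. pose proof inv_INR_t_pos.
  assert (HP : forall s, In s St_t -> 0 < Pword pi P s) by (intros; apply (in_St N pi P t s); auto).
  pose proof (ln_lsum_exp_le _ _ (fun s => - betasq beta s / 2 + x s)
                (fun s => - betasq beta s / 2 + x' s) HP).
  pose proof (ln_lsum_exp_le _ _ (fun s => - betasq beta s / 2 + x' s)
                (fun s => - betasq beta s / 2 + x s) HP).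
  simpl in H0, H1.
  rewrite (lsum_ext_in (fun s => Rabs (- betasq beta s / 2 + x s - (- betasq beta s / 2 + x' s)))
                       (fun s => Rabs (x s - x' s))) in H0 by (intros; apply f_equal; ring).
  rewrite (lsum_ext_in (fun s => Rabs (- betasq beta s / 2 + x' s - (- betasq beta s / 2 + x s)))
                       (fun s => Rabs (x s - x' s))) in H1
    by (intros; rewrite Rabs_minus_sym; apply f_equal; ring).
  set (L := ln (lsum (fun s => Pword pi P s * exp (- betasq beta s / 2 + x s)) St_t)) in *.
  set (L' := ln (lsum (fun s => Pword pi P s * exp (- betasq beta s / 2 + x' s)) St_t)) in *.
  replace (- / INR t * L - - / INR t * L') with (- / INR t * (L - L')) by ring.
  rewrite Rabs_mult, Rabs_Ropp, Rabs_pos_eq by lra.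
  apply Rmult_le_compat_l. lra. apply Rabs_le. lra.
Qed.

Definition phi_lip_const : R := / INR t * lsum (sum_abs beta) St_t.

Lemma lipschitz_n_phi_lin_form (F : list nat -> nat -> nat -> nat) D :
  (forall s, In s St_t -> forall i, (i < length s)%nat -> (F s i (nth i s 0%nat) < D)%nat) ->
  lipschitz_n D phi_lip_const (fun w => phi_t (fun s => lin_form beta (F s) w 0 s)).
Proof.
  intros HF. pose proof inv_INR_t_pos. split.
  - unfold phi_lip_const. apply Rmult_le_pos. lra. apply lsum_ge0. intros; apply sum_abs_ge0.
  - intros w w'. eapply Rle_trans. apply phi_lipschitz. unfold phi_lip_const. rewrite Rmult_assoc.
    apply Rmult_le_compat_l. lra.
    rewrite Rmult_comm, <- lsum_scal. apply lsum_le. intros s Hs.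
    rewrite Rmult_comm. apply lin_form_lipschitz. intros i Hi. apply HF; auto.
Qed.

Lemma phi_Xbar w : phi_t (Xbar N beta w)
  = phi_t (fun s => lin_form beta (fun k a => (a + N * k)%nat) w 0 s).
Proof. f_equal. apply functional_extensionality. intros s. apply xsum_lin_form. Qed.

Lemma phi_Zbar w : phi_t (Zbar N pi P beta t w)
  = phi_t (fun s => lin_form beta (fun k a => (word_index St_t s * t + k)%nat) w 0 s).
Proof. f_equal. apply functional_extensionality. intros s. apply zsum_lin_form. Qed.

Lemma lipschitz_n_phi_Xbar : lipschitz_n (N * t) phi_lip_const (fun w => phi_t (Xbar N beta w)).
Proof.
  eapply lipschitz_n_ext. intros w. symmetry. apply phi_Xbar.
  apply lipschitz_n_phi_lin_form. intros s Hs i Hi.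
  destruct (in_St_letters _ _ _ _ _ Hs) as [Hl Ha]. rewrite Hl in Hi. pose proof (Ha i Hi).
  pose proof (mul_succ_le_mul i N t Hi). rewrite Nat.mul_succ_r in H0. lia.
Qed.

Lemma lipschitz_n_phi_Zbar :
  lipschitz_n (length St_t * t) phi_lip_const (fun w => phi_t (Zbar N pi P beta t w)).
Proof.
  eapply lipschitz_n_ext. intros w. symmetry. apply phi_Zbar.
  apply lipschitz_n_phi_lin_form. intros s Hs i Hi.
  destruct (in_St_letters _ _ _ _ _ Hs) as [Hl Ha]. rewrite Hl in Hi.
  destruct (word_index_spec _ _ Hs) as [Hj _].
  pose proof (Nat.mul_le_mono_r _ _ t Hj). simpl in H. lia.
Qed.

(* The hybrid field interpolating between [Xbar] ([m = 0]) and [Zbar] ([m = |S^t| t], after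
   shifting coordinates by [N t]): position [k] of the [j]-th word reads the private coordinate
   [N t + (j t + k)] once [j t + k < m], and the coordinate [a + N k] shared by all words with
   letter [a] at position [k] otherwise. *)
Definition hybrid_coord (m j k a : nat) : nat :=
  if Nat.ltb (j * t + k) m then (N * t + (j * t + k))%nat else (a + N * k)%nat.

Definition hybrid (m : nat) (w : nat -> R) : R :=
  phi_t (fun s => lin_form beta (hybrid_coord m (word_index St_t s)) w 0 s).

Lemma hybrid_coord_lt m s i : (m <= length St_t * t)%nat -> In s St_t -> (i < length s)%nat ->
  (hybrid_coord m (word_index St_t s) i (nth i s 0%nat) < N * t + length St_t * t)%nat.
Proof.
  intros Hm Hs Hi. destruct (in_St_letters _ _ _ _ _ Hs) as [Hl Ha]. rewrite Hl in Hi.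
  pose proof (Ha i Hi). destruct (word_index_spec _ _ Hs) as [Hj _].
  unfold hybrid_coord. destruct (Nat.ltb_spec (word_index St_t s * t + i) m).
  - pose proof (Nat.mul_le_mono_r _ _ t Hj). simpl in H1. lia.
  - pose proof (mul_succ_le_mul i N t Hi). rewrite Nat.mul_succ_r in H1. lia.
Qed.

Lemma lipschitz_n_hybrid m : (m <= length St_t * t)%nat ->
  lipschitz_n (N * t + length St_t * t) phi_lip_const (hybrid m).
Proof.
  intros Hm. apply lipschitz_n_phi_lin_form. intros s Hs i Hi. apply hybrid_coord_lt; auto.
Qed.

Lemma hybrid_coord_shared m j i a a0 k0 : (i < t)%nat -> (a < N)%nat -> (a0 < N)%nat ->
  (k0 < t)%nat ->
  hybrid_coord m j i a = (a0 + N * k0)%nat -> i = k0 /\ a = a0 /\ ~ (j * t + i < m)%nat.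
Proof.
  intros Hi Ha Ha0 Hk0 E. unfold hybrid_coord in E. destruct (Nat.ltb_spec (j * t + i) m).
  - pose proof (mul_succ_le_mul k0 N t Hk0). rewrite Nat.mul_succ_r in H0. lia.
  - destruct (divmod_inj N i a k0 a0 Ha Ha0) as [E1 E2]; lia.
Qed.

Lemma hybrid_coord_neq_fresh m j i a : (i < t)%nat -> (a < N)%nat ->
  hybrid_coord m j i a <> (N * t + m)%nat.
Proof.
  intros Hi Ha. unfold hybrid_coord. destruct (Nat.ltb_spec (j * t + i) m). lia.
  pose proof (mul_succ_le_mul i N t Hi). rewrite Nat.mul_succ_r in H0. lia.
Qed.

Lemma hybrid_coordS_fresh m j i a : (i < t)%nat -> (a < N)%nat ->
  hybrid_coord (S m) j i a = (N * t + m)%nat -> (j * t + i = m)%nat.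
Proof.
  intros Hi Ha. unfold hybrid_coord. destruct (Nat.ltb_spec (j * t + i) (S m)). lia.
  pose proof (mul_succ_le_mul i N t Hi). rewrite Nat.mul_succ_r in H0. lia.
Qed.

Lemma hybrid_coordS_same m j i a : (j * t + i <> m)%nat ->
  hybrid_coord (S m) j i a = hybrid_coord m j i a.
Proof.
  intros H. unfold hybrid_coord.
  destruct (Nat.ltb_spec (j * t + i) (S m)); destruct (Nat.ltb_spec (j * t + i) m); auto; lia.
Qed.

Lemma hybrid0 w : hybrid 0 w = phi_t (Xbar N beta w).
Proof.
  rewrite phi_Xbar. apply phi_ext_in. intros s Hs. apply lin_form_ext. intros i Hi.
  unfold hybrid_coord. destruct (Nat.ltb_spec (word_index St_t s * t + (0 + i)) 0); [lia|auto].
Qed.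

Lemma hybrid_last w : hybrid (length St_t * t) w = phi_t (Zbar N pi P beta t (wshift (N * t) w)).
Proof.
  rewrite phi_Zbar. apply phi_ext_in. intros s Hs.
  destruct (in_St_letters _ _ _ _ _ Hs) as [Hl Ha]. destruct (word_index_spec _ _ Hs) as [Hj _].
  apply lin_form_ext. intros i Hi. unfold hybrid_coord, wshift.
  pose proof (Nat.mul_le_mono_r _ _ t Hj). simpl in H.
  destruct (Nat.ltb_spec (word_index St_t s * t + (0 + i)) (length St_t * t)); [auto|lia].
Qed.

Section HybridStep.

Variables (m j0 k0 : nat) (s0 : list nat).
Hypotheses (Hm : m = (j0 * t + k0)%nat) (Hk0 : (k0 < t)%nat)
           (Hs0 : In s0 St_t) (Hj0 : word_index St_t s0 = j0).

Local Notation letter := (nth k0 s0 0%nat).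
Local Notation shared := (letter + N * k0)%nat.
Local Notation fresh := (N * t + m)%nat.

Lemma letters_s0_lt i : (i < t)%nat -> (nth i s0 0%nat < N)%nat.
Proof. apply (in_St_letters _ _ _ _ _ Hs0). Qed.

Lemma shared_lt_fresh : (shared < fresh)%nat.
Proof.
  pose proof (letters_s0_lt k0 Hk0). pose proof (mul_succ_le_mul k0 N t Hk0).
  rewrite Nat.mul_succ_r in H0. lia.
Qed.

Definition hybrid_rest (w : nat -> R) (s : list nat) : R :=
  lin_form beta (hybrid_coord m (word_index St_t s)) (wzero2 shared fresh w) 0 s.

Definition hybrid_shared_coef (s : list nat) : R :=
  lin_form_coef beta (hybrid_coord m (word_index St_t s)) shared 0 s.

(* [hybrid m] and [hybrid (S m)] differ only in the coordinate read by the letter [k0] of [s0];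
   [X] is that coordinate and [Y] the shared one read by all the other words. *)
Definition hybrid_profile (w : nat -> R) (X Y : R) : R :=
  phi_t (fun s => hybrid_rest w s
                  + (if word_eqb s s0 then beta letter * X else hybrid_shared_coef s * Y)).

Lemma hybrid_shared_coef_s0 : hybrid_shared_coef s0 = beta letter.
Proof.
  pose proof (in_St_letters _ _ _ _ _ Hs0) as [Hl _].
  unfold hybrid_shared_coef. rewrite Hj0. apply (lin_form_coef_single _ _ _ 0 s0 k0). lia.
  - simpl. unfold hybrid_coord. rewrite <- Hm, Nat.ltb_irrefl. auto.
  - intros i Hi Hne E. simpl in E.
    destruct (hybrid_coord_shared m j0 i (nth i s0 0%nat) letter k0); auto; try lia;
      apply letters_s0_lt; lia.
Qed.

Lemma hybrid_shared_coef_other s : In s St_t -> s <> s0 ->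
  hybrid_shared_coef s = 0 \/ hybrid_shared_coef s = beta letter.
Proof.
  intros Hs Hne. destruct (in_St_letters _ _ _ _ _ Hs) as [Hl Ha].
  pose proof (letters_s0_lt k0 Hk0).
  unfold hybrid_shared_coef.
  destruct (Nat.eq_dec (hybrid_coord m (word_index St_t s) k0 (nth k0 s 0%nat)) shared) as [E|E].
  - right. destruct (hybrid_coord_shared _ _ _ _ _ _ Hk0 (Ha k0 Hk0) H Hk0 E) as [_ [Ea _]].
    rewrite <- Ea at 2. apply lin_form_coef_single. lia. simpl. congruence.
    intros i Hi Hne' E'. simpl in E'. assert (Hit : (i < t)%nat) by lia.
    destruct (hybrid_coord_shared _ _ _ _ _ _ Hit (Ha i Hit) H Hk0 E'). lia.
  - left. apply lin_form_coef_0. intros i Hi E'. simpl in E'. assert (Hit : (i < t)%nat) by lia.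
    destruct (hybrid_coord_shared _ _ _ _ _ _ Hit (Ha i Hit) H Hk0 E') as [-> _]. auto.
Qed.

Lemma lin_form_hybrid s w : In s St_t ->
  lin_form beta (hybrid_coord m (word_index St_t s)) w 0 s
  = hybrid_rest w s + hybrid_shared_coef s * w shared.
Proof.
  intros Hs. destruct (in_St_letters _ _ _ _ _ Hs) as [Hl Ha]. pose proof shared_lt_fresh.
  rewrite (lin_form_decomp _ _ w shared fresh) by lia.
  rewrite (lin_form_coef_0 _ _ fresh). unfold hybrid_rest, hybrid_shared_coef. ring.
  intros i Hi. apply hybrid_coord_neq_fresh; apply Ha || idtac; lia.
Qed.

Lemma lin_form_hybridS_other s w : In s St_t -> s <> s0 ->
  lin_form beta (hybrid_coord (S m) (word_index St_t s)) w 0 s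
  = lin_form beta (hybrid_coord m (word_index St_t s)) w 0 s.
Proof.
  intros Hs Hne. destruct (in_St_letters _ _ _ _ _ Hs) as [Hl Ha]. apply lin_form_ext. intros i Hi.
  rewrite hybrid_coordS_same. auto. intros E. rewrite <- Hj0 in Hm.
  destruct (divmod_inj t (word_index St_t s) i (word_index St_t s0) k0) as [E1 _]; try lia.
  apply Hne. apply (word_index_inj St_t); auto.
Qed.

Lemma lin_form_hybridS_s0 w :
  lin_form beta (hybrid_coord (S m) j0) w 0 s0 = hybrid_rest w s0 + beta letter * w fresh.
Proof.
  pose proof (in_St_letters _ _ _ _ _ Hs0) as [Hl _]. pose proof shared_lt_fresh.
  pose proof (letters_s0_lt k0 Hk0).
  rewrite (lin_form_decomp _ _ w shared fresh) by lia.
  assert (C1 : lin_form_coef beta (hybrid_coord (S m) j0) shared 0 s0 = 0).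
  { apply lin_form_coef_0. intros i Hi E. simpl in E. assert (Hit : (i < t)%nat) by lia.
    destruct (hybrid_coord_shared _ _ _ _ _ _ Hit (letters_s0_lt i Hit) H0 Hk0 E) as [-> [_ H3]].
    lia. }
  assert (C2 : lin_form_coef beta (hybrid_coord (S m) j0) fresh 0 s0 = beta letter).
  { apply (lin_form_coef_single _ _ _ 0 s0 k0). lia.
    - simpl. unfold hybrid_coord. destruct (Nat.ltb_spec (j0 * t + k0) (S m)); lia.
    - intros i Hi Hne E. simpl in E. apply hybrid_coordS_fresh in E; try lia.
      apply letters_s0_lt. lia. }
  rewrite C1, C2. unfold hybrid_rest. rewrite Hj0.
  rewrite (lin_form_ext _ (hybrid_coord (S m) j0) (hybrid_coord m j0) (wzero2 shared fresh w)
                       (wzero2 shared fresh w)); [ring|].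
  intros i Hi. simpl. destruct (Nat.eq_dec i k0) as [->|Hne].
  - unfold wzero2, hybrid_coord. rewrite <- Hm, Nat.ltb_irrefl.
    destruct (Nat.ltb_spec m (S m)); [|lia]. rewrite Nat.eqb_refl.
    destruct (Nat.eqb_spec fresh shared); [lia|]. rewrite Nat.eqb_refl. auto.
  - rewrite hybrid_coordS_same. auto. intros E. destruct (divmod_inj t j0 i j0 k0); lia.
Qed.

Lemma hybrid_at w : hybrid m w = hybrid_profile w (w shared) (w shared).
Proof.
  unfold hybrid, hybrid_profile. apply phi_ext_in. intros s Hs. rewrite lin_form_hybrid by auto.
  unfold word_eqb. destruct (list_eq_dec Nat.eq_dec s s0) as [->|]; auto.
  rewrite hybrid_shared_coef_s0. auto.
Qed.

Lemma hybridS_at w : hybrid (S m) w = hybrid_profile w (w fresh) (w shared).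
Proof.
  unfold hybrid, hybrid_profile. apply phi_ext_in. intros s Hs.
  unfold word_eqb. destruct (list_eq_dec Nat.eq_dec s s0) as [->|Hne].
  - rewrite Hj0. apply lin_form_hybridS_s0.
  - rewrite lin_form_hybridS_other, lin_form_hybrid by auto. auto.
Qed.

Lemma hybrid_profile_wtransp w X Y : hybrid_profile (wtransp shared fresh w) X Y
  = hybrid_profile w X Y.
Proof.
  unfold hybrid_profile, hybrid_rest.
  replace (wzero2 shared fresh (wtransp shared fresh w)) with (wzero2 shared fresh w); [reflexivity|].
  apply functional_extensionality. intros n.
  unfold wzero2, wtransp, transp.
  destruct (Nat.eqb_spec n shared); auto. destruct (Nat.eqb_spec n fresh); auto.
Qed.

Lemma hybrid_swap_le w :
  hybrid (S m) w + hybrid (S m) (wtransp shared fresh w) <= hybrid m w + hybrid m (wtransp shared fresh w).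
Proof.
  pose proof shared_lt_fresh.
  assert (Es : wtransp shared fresh w shared = w fresh)
    by (unfold wtransp, transp; rewrite Nat.eqb_refl; auto).
  assert (Ef : wtransp shared fresh w fresh = w shared).
  { unfold wtransp, transp. destruct (Nat.eqb_spec fresh shared); [lia|]. rewrite Nat.eqb_refl. auto. }
  rewrite !hybrid_at, !hybridS_at, !hybrid_profile_wtransp, Es, Ef.
  set (q := fun s => Pword pi P s * exp (- betasq beta s / 2 + hybrid_rest w s)).
  assert (Hprof : forall X Y, hybrid_profile w X Y = - / INR t *
    ln (lsum (fun s => q s * exp (if word_eqb s s0 then beta letter * X else hybrid_shared_coef s * Y)) St_t)).
  { intros X Y. unfold hybrid_profile. rewrite phi_lsum. do 2 f_equal. apply lsum_ext_in. intros s _.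
    unfold q. rewrite Rmult_assoc, <- exp_plus. do 2 f_equal. ring. }
  rewrite !Hprof.
  assert (Hq : forall s, In s St_t -> 0 < q s).
  { intros s Hs. apply Rmult_lt_0_compat. apply (in_St N pi P t s); auto. apply exp_pos. }
  pose proof (ln_lsum_exp_supermod St_t q hybrid_shared_coef s0 (beta letter) (w shared) (w fresh)
                Hq Hs0 hybrid_shared_coef_other) as SM.
  simpl in SM. pose proof inv_INR_t_pos. nra.
Qed.

End HybridStep.

(* Averaging [hybrid_swap_le] over the Gaussian vector, the transposition of the shared and the
   fresh coordinate does not change the mean. *)
Lemma gauss_mean_hybridS_le m : (m < length St_t * t)%nat ->
  gauss_mean_n (N * t + length St_t * t) (hybrid (S m))
  <= gauss_mean_n (N * t + length St_t * t) (hybrid m).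
Proof.
  intros Hm. set (D := (N * t + length St_t * t)%nat).
  set (j0 := (m / t)%nat). set (k0 := (m mod t)%nat).
  assert (Hmj : m = (j0 * t + k0)%nat).
  { pose proof (Nat.div_mod_eq m t). unfold j0, k0. rewrite Nat.mul_comm. lia. }
  assert (Hk0 : (k0 < t)%nat) by (apply Nat.mod_upper_bound; lia).
  assert (L0 : lipschitz_n D phi_lip_const (hybrid m)) by (apply lipschitz_n_hybrid; lia).
  assert (L1 : lipschitz_n D phi_lip_const (hybrid (S m))) by (apply lipschitz_n_hybrid; lia).
  destruct (classic (exists s0, In s0 St_t /\ word_index St_t s0 = j0)) as [[s0 [Hs0 Hj0]]|Hno].
  - set (c := (nth k0 s0 0%nat + N * k0)%nat). set (c' := (N * t + m)%nat).
    assert (Hcc : (c < c')%nat) by (apply (shared_lt_fresh m j0 k0 s0); auto).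
    assert (Hc'D : (c' < D)%nat) by (unfold c', D; lia).
    destruct (gauss_mean_n_wtransp c c' D _ _ Hcc Hc'D L0) as [L0' E0].
    destruct (gauss_mean_n_wtransp c c' D _ _ Hcc Hc'D L1) as [L1' E1].
    assert (PW : forall w, 1 * hybrid (S m) w + 1 * hybrid (S m) (wtransp c c' w)
                           <= 1 * hybrid m w + 1 * hybrid m (wtransp c c' w)).
    { intros w. rewrite !Rmult_1_l. apply (hybrid_swap_le m j0 k0 s0); auto. }
    pose proof (gauss_mean_n_le D _ _ _ _ (lipschitz_n_lin _ _ _ _ _ 1 1 L1 L1')
                  (lipschitz_n_lin _ _ _ _ _ 1 1 L0 L0') PW) as H.
    pose proof (gauss_mean_n_lin D _ _ _ _ 1 1 L1 L1') as EL1.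
    pose proof (gauss_mean_n_lin D _ _ _ _ 1 1 L0 L0') as EL0.
    cbv beta in H, EL1, EL0. rewrite EL1, EL0, E0, E1 in H. lra.
  - right. apply gauss_mean_n_ext. intros w. unfold hybrid. apply phi_ext_in. intros s Hs.
    destruct (in_St_letters _ _ _ _ _ Hs) as [Hl Ha].
    apply lin_form_ext. intros i Hi. rewrite hybrid_coordS_same; auto. intros E. apply Hno.
    exists s. split; auto. destruct (divmod_inj t (word_index St_t s) i j0 k0); lia.
Qed.

Lemma gauss_mean_hybrid_le m : (m <= length St_t * t)%nat ->
  gauss_mean_n (N * t + length St_t * t) (hybrid m)
  <= gauss_mean_n (N * t + length St_t * t) (hybrid 0).
Proof.
  induction m; intros Hm. lra.
  pose proof (gauss_mean_hybridS_le m ltac:(lia)). pose proof (IHm ltac:(lia)). lra.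
Qed.

End Model.

Theorem lemma4 (N : nat) (P : nat -> nat -> R) (pi beta : nat -> R) (t : nat) :
  row_stochastic N P -> irreducible N P -> aperiodic N P ->
  stationary_pos N P pi ->
  (1 <= t)%nat ->
  (exists vX, gauss_exp (N * t) (fun w => phi N pi P beta t (Xbar N beta w)) vX) /\
  (exists vZ, gauss_exp (length (St N pi P t) * t)
                (fun w => phi N pi P beta t (Zbar N pi P beta t w)) vZ) /\
  (forall vX vZ,
     gauss_exp (N * t) (fun w => phi N pi P beta t (Xbar N beta w)) vX ->
     gauss_exp (length (St N pi P t) * t)
       (fun w => phi N pi P beta t (Zbar N pi P beta t w)) vZ ->
     vZ <= vX).
Proof.
  intros _ _ _ _ Ht.
  pose proof (lipschitz_n_phi_Xbar N P pi beta t Ht) as LX.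
  pose proof (lipschitz_n_phi_Zbar N P pi beta t Ht) as LZ.
  split; [|split].
  - eexists. apply (gauss_exp_gauss_mean_n _ _ _ LX).
  - eexists. apply (gauss_exp_gauss_mean_n _ _ _ LZ).
  - intros vX vZ HX HZ.
    rewrite (gauss_exp_unique _ _ _ _ LX HX), (gauss_exp_unique _ _ _ _ LZ HZ).
    rewrite <- (gauss_mean_n_pad _ (length (St N pi P t) * t) _ _ LX).
    rewrite <- (gauss_mean_n_wshift (N * t)).
    rewrite (gauss_mean_n_ext _ (fun w => phi N pi P beta t (Xbar N beta w)) (hybrid N P pi beta t 0))
      by (intros; symmetry; apply hybrid0; auto).
    rewrite (gauss_mean_n_ext _ _ (hybrid N P pi beta t (length (St N pi P t) * t)))
      by (intros; symmetry; apply hybrid_last; auto).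
    apply gauss_mean_hybrid_le; auto.
Qed.
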